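(* Let $E_0>0$, $n\ge0$ real, $C>0$, and let $\phi:(-\infty,1]\to\mathbb R_+$ be continuous on $[0,1]$ with $\phi(x)=0$ for $x<0$ and $\lim_{x\to0^+}x^{-n}\phi(x)=C$. With $\epsilon=E_0/V-1$, as $V\to E_0^-$, $\varrho(V)\sim4\sqrt2\,\pi C A_n\,\epsilon^{n+3/2}$ and $p(V)\sim2^{3/2}\tfrac{4}{3}\pi C B_n\,\epsilon^{n+5/2}$, where $A_n=\frac{\sqrt\pi\,\Gamma(n+1)}{2\Gamma(n+5/2)}$, $B_n=\frac{3\sqrt\pi\,\Gamma(n+1)}{4\Gamma(n+7/2)}$, and $a\sim b$ means $a/b\to1$. In particular $p\sim K\varrho^\gamma$ as $V\to E_0^-$ with $\gamma=\frac{2n+5}{2n+3}$ and $K=\frac23\,(4\sqrt2\pi C)^{-2/(2n+3)}\,B_n\,A_n^{-(2n+5)/(2n+3)}$.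
   Context: For $V\in(0,E_0]$: $\varrho(V)=\frac{4\pi}{V^3}\int_V^{E_0}\phi(1-E/E_0)E^2\sqrt{(E/V)^2-1}\,dE$, $p(V)=\frac{4\pi}{3V}\int_V^{E_0}\phi(1-E/E_0)[(E/V)^2-1]^{3/2}dE$. $\Gamma$ here denotes the Gamma function. *)

From Stdlib Require Import Reals Lra ClassicalEpsilon.
Open Scope R_scope.

Definition RInt (f : R -> R) (a b : R) : R :=
  match excluded_middle_informative (exists _ : Riemann_integrable f a b, True) with
  | left H => RiemannInt (proj1_sig (constructive_indefinite_description _ H))
  | right _ => 0
  end.

Definition is_Gamma (s g : R) : Prop :=
  forall eps, 0 < eps -> exists d M, 0 < d /\ 0 < M /\
    forall a b, 0 < a < d -> M < b ->
      Rabs (RInt (fun t => Rpower t (s - 1) * exp (- t)) a b - g) < eps.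

Definition rho (phi : R -> R) (E0 V : R) : R :=
  4 * PI / V ^ 3 *
  RInt (fun E => phi (1 - E / E0) * E ^ 2 * sqrt ((E / V) ^ 2 - 1)) V E0.

(* p(V) = 4 pi / (3 V) * \int_V^{E0} phi(1 - E/E0) [(E/V)^2 - 1]^{3/2} dE,
   with x^{3/2} written x * sqrt x (x >= 0 on [V,E0]) to avoid Rpower's convention at 0 *)
Definition pres (phi : R -> R) (E0 V : R) : R :=
  4 * PI / (3 * V) *
  RInt (fun E => phi (1 - E / E0) * ((E / V) ^ 2 - 1) * sqrt ((E / V) ^ 2 - 1)) V E0.

(* Substituting E = E0 - (E0 - V) s and writing eps = E0 / V - 1 turns rho(V) into
   4 pi eps^(n + 3/2) times an integral over s in (0, 1) whose integrand tends, uniformly in s,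
   to sqrt 2 C s^n (1 - s)^(1/2) as eps -> 0, because phi(x) ~ C x^n; likewise p(V) is
   4/3 pi eps^(n + 5/2) times an integral with limit integrand 2 sqrt 2 C s^n (1 - s)^(3/2).
   The limits are Beta integrals B(n + 1, 3/2) and B(n + 1, 5/2), which the relation
   B(x, y) Gamma(x + y) = Gamma(x) Gamma(y) and Gamma(3/2) = sqrt pi / 2 identify with A_n and
   B_n.  Gamma is built from its integral, and the Beta-Gamma relation comes from Gauss'
   formula M^x B(x, M) -> Gamma(x).  Finally eps^(n + 5/2) = (eps^(n + 3/2))^gamma turns the
   two asymptotics into the power law. *)

From Pilot Require Import Defs.
From Stdlib Require Import Reals Lra Lia ClassicalEpsilon Classical.
From Coquelicot Require Import Coquelicot.
Open Scope R_scope.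

Lemma Rabs_le_inv x y : Rabs x <= y -> - y <= x <= y.
Proof. unfold Rabs; destruct (Rcase_abs x); lra. Qed.

Lemma Rabs_lt_inv x y : Rabs x < y -> - y < x < y.
Proof. unfold Rabs; destruct (Rcase_abs x); lra. Qed.

Lemma Rabs_lt_all_eq_0 x : (forall e, 0 < e -> Rabs x < e) -> x = 0.
Proof.
  intros H. destruct (Req_dec x 0); auto.
  assert (0 < Rabs x) by (apply Rabs_pos_lt; auto).
  specialize (H _ H1). lra.
Qed.

Lemma exp_le x y : x <= y -> exp x <= exp y.
Proof. intros [H|H]; [left; apply exp_increasing; auto| subst; lra]. Qed.

Lemma ln_le_minus_1 x : 0 < x -> ln x <= x - 1.
Proof.
  intros Hx. rewrite <- (ln_exp (x - 1)). apply ln_le; auto.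
  generalize (exp_ineq1_le (x - 1)); lra.
Qed.

Lemma Rpower_pos x y : 0 < Rpower x y.
Proof. unfold Rpower; apply exp_pos. Qed.

Lemma Rpower_Rinv_l u a : 0 < u -> Rpower (/ u) a = / Rpower u a.
Proof. intros. unfold Rpower. rewrite ln_Rinv by auto. rewrite <- exp_Ropp. f_equal; ring. Qed.

Lemma exp_neg_le_inv y : 0 < y -> exp (- y) <= / y.
Proof.
  intros Hy. assert (H := exp_ineq1_le y).
  assert (H2 : exp y * exp (- y) = 1) by (rewrite <- exp_plus; replace (y + - y) with 0 by ring; apply exp_0).
  assert (0 < exp (- y)) by apply exp_pos.
  apply Rmult_le_reg_l with y; auto. rewrite Rinv_r by lra. nra.
Qed.

Lemma exp_le_1_plus_2x u : 0 <= u <= 1/2 -> exp u <= 1 + 2 * u.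
Proof.
  intros Hu. assert (H1 := exp_ineq1_le (- u)).
  assert (H2 : exp u * exp (- u) = 1) by (rewrite <- exp_plus; replace (u + - u) with 0 by ring; apply exp_0).
  assert (0 < exp u) by apply exp_pos. nra.
Qed.

Lemma ln_1_minus_ge u : 0 <= u <= 1/2 -> - u - 2 * u ^ 2 <= ln (1 - u).
Proof.
  intros Hu. assert (Hp : 0 < 1 - u) by lra.
  assert (H1 := ln_le_minus_1 (/ (1 - u)) (Rinv_0_lt_compat _ Hp)).
  rewrite ln_Rinv in H1 by auto.
  assert (H2 : / (1 - u) - 1 <= u + 2 * u ^ 2).
  { apply Rmult_le_reg_l with (1 - u); auto.
    replace ((1 - u) * (/ (1 - u) - 1)) with u by (field; lra). nra. }
  lra.
Qed.

Lemma continuity_pt_intro f x :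
  (forall e, 0 < e -> exists d, 0 < d /\ forall y, Rabs (y - x) < d -> Rabs (f y - f x) < e) ->
  continuity_pt f x.
Proof.
  intros H e He. destruct (H e He) as [d [Hd H1]]. exists d; split; auto.
  intros y [_ Hy]. simpl in *. unfold R_dist in *. apply H1; auto.
Qed.

Lemma continuity_pt_elim f x : continuity_pt f x ->
  forall e, 0 < e -> exists d, 0 < d /\ forall y, Rabs (y - x) < d -> Rabs (f y - f x) < e.
Proof.
  intros H e He. destruct (H e He) as [d [Hd H1]]. exists d; split; auto.
  intros y Hy. destruct (Req_dec y x) as [->|Hne].
  - unfold Rminus; rewrite Rplus_opp_r, Rabs_R0; auto.
  - apply (H1 y). split; [split; [exact I| auto]|]. exact Hy.
Qed.

Lemma continuity_pt_Rpower x y : 0 < x -> continuity_pt (fun t => Rpower t y) x.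
Proof.
  intros Hx. apply derivable_continuous_pt. exists (y * Rpower x (y-1)).
  apply derivable_pt_lim_power; auto.
Qed.

Lemma limit1_in_intro f D l x0 :
  (forall e, 0 < e -> exists a, 0 < a /\ forall x, D x -> Rabs (x - x0) < a -> Rabs (f x - l) < e) ->
  limit1_in f D l x0.
Proof.
  intros H e He. destruct (H e He) as [a [Ha H1]]. exists a; split; auto.
  intros x [Hx Hd]. simpl in *. unfold R_dist in *. auto.
Qed.

Lemma limit1_in_elim f D l x0 : limit1_in f D l x0 ->
  forall e, 0 < e -> exists a, 0 < a /\ forall x, D x -> Rabs (x - x0) < a -> Rabs (f x - l) < e.
Proof.
  intros H e He. destruct (H e He) as [a [Ha H1]]. exists a; split; auto.
  intros x Hx Hd. apply (H1 x). split; auto.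
Qed.

Lemma limit1_in_ext f g D l x0 : (forall x, D x -> f x = g x) ->
  limit1_in g D l x0 -> limit1_in f D l x0.
Proof.
  intros Hfg Hg. apply limit1_in_intro. intros e He.
  destruct (limit1_in_elim _ _ _ _ Hg e He) as [a [Ha H1]].
  exists a; split; auto. intros x Hx Hd. rewrite Hfg; auto.
Qed.

Lemma limit1_in_ext_locally f g D l x0 r : 0 < r ->
  (forall x, D x -> Rabs (x - x0) < r -> f x = g x) ->
  limit1_in g D l x0 -> limit1_in f D l x0.
Proof.
  intros Hr Hfg Hg. apply limit1_in_intro. intros e He.
  destruct (limit1_in_elim _ _ _ _ Hg e He) as [a [Ha H1]].
  exists (Rmin a r); split. apply Rmin_glb_lt; auto.
  intros x Hx Hd. rewrite Hfg; auto. apply H1; auto.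
  eapply Rlt_le_trans; [apply Hd|apply Rmin_l].
  eapply Rlt_le_trans; [apply Hd|apply Rmin_r].
Qed.

Lemma limit1_in_comp_continuity_pt f h D l x0 : limit1_in f D l x0 -> continuity_pt h l ->
  limit1_in (fun x => h (f x)) D (h l) x0.
Proof.
  intros Hf Hh. apply limit1_in_intro. intros e He.
  destruct (continuity_pt_elim _ _ Hh e He) as [d [Hd H1]].
  destruct (limit1_in_elim _ _ _ _ Hf d Hd) as [a [Ha H2]].
  exists a; split; auto.
Qed.

Lemma continuity_pt_comp_total f g x :
  continuity_pt f x -> (forall y, continuity_pt g y) -> continuity_pt (fun t => g (f t)) x.
Proof. intros Hf Hg; exact (continuity_pt_comp f g x Hf (Hg _)). Qed.

Lemma continuity_pt_sqrt_all y : continuity_pt sqrt y.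
Proof. apply continuity_pt_filterlim, continuous_sqrt. Qed.

Lemma derivable_pt_lim_ext_locally f g x l d : 0 < d -> (forall t, Rabs (t - x) < d -> f t = g t) ->
  derivable_pt_lim f x l -> derivable_pt_lim g x l.
Proof.
  intros Hd Hfg H e He. destruct (H e He) as [del Hdel].
  assert (Hm : 0 < Rmin del d) by (apply Rmin_glb_lt; auto; apply cond_pos).
  exists (mkposreal _ Hm). intros h Hh0 Hh. simpl in Hh.
  rewrite <- !Hfg. apply Hdel; auto. eapply Rlt_le_trans; [apply Hh|apply Rmin_l].
  unfold Rminus; rewrite Rplus_opp_r, Rabs_R0; auto.
  replace (x + h - x) with h by ring. eapply Rlt_le_trans; [apply Hh|apply Rmin_r].
Qed.

Lemma derivable_pt_lim_eq f x l l' : derivable_pt_lim f x l -> l = l' -> derivable_pt_lim f x l'.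
Proof. intros; subst; auto. Qed.

(* Coquelicot's integration lemmas are stated for an arbitrary complete normed module, whose
   instance is not inferred for R-valued functions; the variants below fix it. *)
Lemma continuity_pt_continuous f x : continuity_pt f x -> continuous f x.
Proof. apply continuity_pt_filterlim. Qed.

Lemma ex_RInt_continuity_pt f a b : (forall x, Rmin a b <= x <= Rmax a b -> continuity_pt f x) -> ex_RInt f a b.
Proof. intros H; apply (ex_RInt_continuous (V:=R_CompleteNormedModule)); intros; apply continuity_pt_continuous; auto. Qed.

Lemma Defs_RInt_eq f a b : ex_RInt f a b -> Defs.RInt f a b = RInt f a b.
Proof.
  intros H. unfold Defs.RInt.
  destruct (excluded_middle_informative _) as [H1|H1].
  - destruct (constructive_indefinite_description _ H1) as [pr Hpr]. simpl.
    symmetry; apply RInt_Reals.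
  - exfalso; apply H1. exists (ex_RInt_Reals_0 _ _ _ H); exact I.
Qed.

Lemma ex_RInt_Chasles_1R (f : R -> R) a b c : a <= b <= c -> ex_RInt f a c -> ex_RInt f a b.
Proof. apply (ex_RInt_Chasles_1 (V:=R_CompleteNormedModule)). Qed.
Lemma ex_RInt_Chasles_2R (f : R -> R) a b c : a <= b <= c -> ex_RInt f a c -> ex_RInt f b c.
Proof. apply (ex_RInt_Chasles_2 (V:=R_CompleteNormedModule)). Qed.
Lemma RInt_Chasles_R f a b c : ex_RInt f a b -> ex_RInt f b c -> @eq R (RInt f a c) (RInt f a b + RInt f b c).
Proof. intros; symmetry; apply (RInt_Chasles (V:=R_CompleteNormedModule)); auto. Qed.

Lemma RInt_ext_R (f g : R -> R) a b : (forall x, Rmin a b < x < Rmax a b -> @eq R (f x) (g x)) ->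
  @eq R (RInt f a b) (RInt g a b).
Proof. intros; apply (RInt_ext (V:=R_CompleteNormedModule)); auto. Qed.
Lemma ex_RInt_ext_R (f g : R -> R) a b : (forall x, Rmin a b < x < Rmax a b -> @eq R (f x) (g x)) ->
  ex_RInt f a b -> ex_RInt g a b.
Proof. intros; apply (ex_RInt_ext (V:=R_CompleteNormedModule) f); auto. Qed.

Lemma RInt_scal_R (f : R -> R) a b k : ex_RInt f a b ->
  @eq R (RInt (fun t => k * f t) a b) (k * RInt f a b).
Proof. intros H. exact (RInt_scal (V:=R_CompleteNormedModule) f a b k H). Qed.

Lemma ex_RInt_scal_R (f : R -> R) a b k : ex_RInt f a b -> ex_RInt (fun t => k * f t) a b.
Proof. intros H. exact (ex_RInt_scal (V:=R_CompleteNormedModule) f a b k H). Qed.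

Lemma RInt_scal_minus (g h : R -> R) a b A B : ex_RInt g a b -> ex_RInt h a b ->
  @eq R (RInt (fun s => A * g s - B * h s) a b) (A * RInt g a b - B * RInt h a b).
Proof.
  intros Hg Hh. apply is_RInt_unique.
  assert (H1 := is_RInt_scal (V:=R_CompleteNormedModule) g a b A _ (RInt_correct _ _ _ Hg)).
  assert (H2 := is_RInt_scal (V:=R_CompleteNormedModule) h a b B _ (RInt_correct _ _ _ Hh)).
  assert (H3 := is_RInt_minus _ _ _ _ _ _ H1 H2).
  exact H3.
Qed.

Lemma RInt_antiderivative (F f : R -> R) c d : c <= d ->
  (forall x, c <= x <= d -> continuity_pt f x) ->
  (forall x, c <= x <= d -> derivable_pt_lim F x (f x)) ->
  @eq R (RInt f c d) (F d - F c).
Proof.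
  intros Hcd Hf HF.
  apply is_RInt_unique.
  assert (H := is_RInt_derive (V:=R_CompleteNormedModule) F f c d).
  rewrite Rmin_left, Rmax_right in H by auto.
  apply H. intros; apply is_derive_Reals; auto.
  intros; apply continuity_pt_continuous; auto.
Qed.

Lemma continuity_Rabs_bounded f a b : a <= b -> (forall x, a <= x <= b -> continuity_pt f x) ->
  exists M, 0 < M /\ forall t, a <= t <= b -> Rabs (f t) <= M.
Proof.
  intros Hab Hf.
  destruct (continuity_ab_maj f a b Hab Hf) as [xM [HM _]].
  destruct (continuity_ab_min f a b Hab Hf) as [xm [Hm _]].
  exists (Rabs (f xM) + Rabs (f xm) + 1); split.
  - generalize (Rabs_pos (f xM)), (Rabs_pos (f xm)); lra.
  - intros t Ht. specialize (HM t Ht). specialize (Hm t Ht).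
    generalize (Rabs_pos (f xM)), (Rabs_pos (f xm)), (Rle_abs (f xM)), (Rle_abs (- f xm)).
    rewrite Rabs_Ropp. intros. apply Rabs_le; lra.
Qed.

Lemma RInt_antiderivative_open (F f : R -> R) a b : a < b ->
  (forall x, a <= x <= b -> continuity_pt f x) ->
  (forall x, a < x < b -> derivable_pt_lim F x (f x)) ->
  continuity_pt F a -> continuity_pt F b ->
  @eq R (RInt f a b) (F b - F a).
Proof.
  intros Hab Hf HF HFa HFb.
  destruct (continuity_Rabs_bounded f a b (Rlt_le _ _ Hab) Hf) as [M [HM0 HMb]].
  assert (Hex : ex_RInt f a b) by (apply ex_RInt_continuity_pt; intros; apply Hf;
     rewrite Rmin_left, Rmax_right in *; lra).
  apply Rminus_diag_uniq. apply Rabs_lt_all_eq_0. intros e He.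
  destruct (continuity_pt_elim _ _ HFa (e/4)) as [d1 [Hd1 H1]]; [lra|].
  destruct (continuity_pt_elim _ _ HFb (e/4)) as [d2 [Hd2 H2]]; [lra|].
  set (h := Rmin (Rmin (d1/2) (d2/2)) (Rmin ((b-a)/4) (e / (8 * M)))).
  assert (Hh0 : 0 < h).
  { unfold h. repeat apply Rmin_glb_lt; try lra. apply Rdiv_lt_0_compat; lra. }
  assert (Hh1 : h <= d1/2) by (unfold h; eapply Rle_trans; [apply Rmin_l|apply Rmin_l]).
  assert (Hh2 : h <= d2/2) by (unfold h; eapply Rle_trans; [apply Rmin_l|apply Rmin_r]).
  assert (Hh3 : h <= (b-a)/4) by (unfold h; eapply Rle_trans; [apply Rmin_r|apply Rmin_l]).
  assert (HhM : M * h <= e / 8).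
  { apply Rle_trans with (M * (e/(8*M))); [|right; field; lra].
    apply Rmult_le_compat_l; [lra|]. unfold h; eapply Rle_trans; [apply Rmin_r|apply Rmin_r]. }
  set (c := a + h). set (d := b - h).
  assert (Hac : ex_RInt f a c) by (apply ex_RInt_Chasles_1R with b; auto; unfold c; lra).
  assert (Hcb : ex_RInt f c b) by (apply ex_RInt_Chasles_2R with a; auto; unfold c; lra).
  assert (Hcd : ex_RInt f c d) by (apply ex_RInt_Chasles_1R with b; auto; unfold c, d; lra).
  assert (Hdb : ex_RInt f d b) by (apply ex_RInt_Chasles_2R with c; auto; unfold c, d; lra).
  rewrite (RInt_Chasles_R f a c b Hac Hcb), (RInt_Chasles_R f c d b Hcd Hdb).
  rewrite (RInt_antiderivative F f c d);
    [| unfold c, d; lra | intros; apply Hf; unfold c, d in *; lra | intros; apply HF; unfold c, d in *; lra].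
  assert (A1 : Rabs (RInt f a c) <= (c - a) * M)
    by (apply abs_RInt_le_const; auto; [unfold c; lra| intros; apply HMb; unfold c in *; lra]).
  assert (A2 : Rabs (RInt f d b) <= (b - d) * M)
    by (apply abs_RInt_le_const; auto; [unfold d; lra| intros; apply HMb; unfold d in *; lra]).
  assert (A3 : Rabs (F c - F a) < e/4) by (apply H1; unfold c; rewrite Rabs_pos_eq; lra).
  assert (A4 : Rabs (F d - F b) < e/4) by (apply H2; unfold d; rewrite Rabs_left; lra).
  unfold c, d in *. replace (a + h - a) with h in A1 by ring. replace (b - (b - h)) with h in A2 by ring.
  apply Rabs_lt_inv in A3. apply Rabs_lt_inv in A4. apply Rabs_le_inv in A1. apply Rabs_le_inv in A2.
  apply Rabs_def1; nra.
Qed.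

(** * Real powers and the Gamma function *)

(* [Rpower t y = exp (y ln t)] is junk for t <= 0; [Rpower0] extends t^y by its limit at 0
   (0 for y > 0, 1 for y <= 0), so that t^(x - 1) is continuous on [0, +oo) for x >= 1. *)
Definition Rpower0 (x y : R) : R :=
  if Rlt_dec 0 x then Rpower x y else if Rle_dec y 0 then 1 else 0.

Lemma Rpower0_pos x y : 0 < x -> Rpower0 x y = Rpower x y.
Proof. intros; unfold Rpower0; destruct (Rlt_dec 0 x); [reflexivity|lra]. Qed.

Lemma Rpower0_ge_0 x y : 0 <= Rpower0 x y.
Proof.
  unfold Rpower0; destruct (Rlt_dec 0 x). left; apply Rpower_pos.
  destruct (Rle_dec y 0); lra.
Qed.

Lemma continuity_pt_Rpower0 x y : 0 <= y -> continuity_pt (fun t => Rpower0 t y) x.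
Proof.
  intros Hy. apply continuity_pt_intro. intros e He.
  destruct (Rlt_le_dec 0 x) as [Hx|Hx].
  - destruct (continuity_pt_elim _ _ (continuity_pt_Rpower x y Hx) e He) as [d [Hd H1]].
    exists (Rmin d x); split. apply Rmin_glb_lt; auto.
    intros t Ht. assert (Htd : Rabs (t - x) < d) by (eapply Rlt_le_trans; [apply Ht|apply Rmin_l]).
    assert (Htx : Rabs (t - x) < x) by (eapply Rlt_le_trans; [apply Ht|apply Rmin_r]).
    assert (0 < t) by (apply Rabs_def2 in Htx; lra).
    rewrite !Rpower0_pos; auto.
  - destruct (Rle_lt_or_eq_dec _ _ Hy) as [Hy'|Hy'].
    + destruct (Rlt_le_dec x 0) as [Hx'|Hx'].
      * exists (- x); split; [lra|]. intros t Ht. apply Rabs_def2 in Ht.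
        unfold Rpower0. destruct (Rlt_dec 0 t); [lra|]. destruct (Rlt_dec 0 x); [lra|].
        unfold Rminus; rewrite Rplus_opp_r, Rabs_R0; auto.
      * assert (x = 0) by lra; subst x.
        exists (Rpower e (/ y)); split. apply Rpower_pos.
        intros t Ht. unfold Rpower0 at 2. destruct (Rlt_dec 0 0); [lra|].
        destruct (Rle_dec y 0); [lra|]. rewrite Rminus_0_r.
        unfold Rpower0. destruct (Rlt_dec 0 t).
        -- rewrite Rminus_0_r in Ht. rewrite Rabs_pos_eq in Ht by lra.
           rewrite Rabs_pos_eq by (left; apply Rpower_pos).
           replace e with (Rpower (Rpower e (/ y)) y).
           apply Rlt_Rpower_l; [lra|]. split; [lra|]. exact Ht.
           rewrite Rpower_mult, Rinv_l by (apply Rgt_not_eq; lra); rewrite Rpower_1 by lra; reflexivity.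
        -- destruct (Rle_dec y 0); [lra|]. rewrite Rabs_R0; auto.
    + subst y. exists 1; split; [lra|]. intros t _.
      assert (forall u, Rpower0 u 0 = 1) as HP.
      { intro u. unfold Rpower0. destruct (Rlt_dec 0 u). apply Rpower_O; auto.
        destruct (Rle_dec 0 0); lra. }
      rewrite !HP. unfold Rminus; rewrite Rplus_opp_r, Rabs_R0; auto.
Qed.

Ltac solve_continuity := repeat (match goal with
 | |- continuity_pt (fun t => @?f t / ?c) _ =>
     apply (continuity_pt_div f (fun _ => c));
     [| apply continuity_pt_const; intros ??; reflexivity | try (cbv beta; lra)]
 | |- continuity_pt (fun t => @?f t * @?g t) _ => apply (continuity_pt_mult f g)
 | |- continuity_pt (fun t => @?f t + @?g t) _ => apply (continuity_pt_plus f g)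
 | |- continuity_pt (fun t => @?f t - @?g t) _ => apply (continuity_pt_minus f g)
 | |- continuity_pt (fun t => - @?f t) _ => apply (continuity_pt_opp f)
 | |- continuity_pt (fun t => @?f t ^ ?k) _ =>
     apply (continuity_pt_comp_total f (fun u => u ^ k));
     [| intro; apply derivable_continuous_pt, derivable_pt_pow]
 | |- continuity_pt (fun t => Rpower0 (@?f t) ?y) _ =>
     apply (continuity_pt_comp_total f (fun u => Rpower0 u y));
     [| intro; apply continuity_pt_Rpower0; try lra]
 | |- continuity_pt (fun t => exp (@?f t)) _ =>
     apply (continuity_pt_comp_total f exp); [| intro; apply derivable_continuous_pt, derivable_pt_exp]
 | |- continuity_pt (fun t => sqrt (@?f t)) _ =>
     apply (continuity_pt_comp_total f sqrt); [| apply continuity_pt_sqrt_all]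
 | |- continuity_pt (fun t => Rabs (@?f t)) _ =>
     apply (continuity_pt_comp_total f Rabs); [| apply Rcontinuity_abs]
 | |- continuity_pt (fun t => sin (@?f t)) _ =>
     apply (continuity_pt_comp_total f sin); [| intro; apply derivable_continuous_pt, derivable_pt_sin]
 | |- continuity_pt (fun t => t) _ => apply derivable_continuous_pt, derivable_pt_id
 | |- continuity_pt (fun _ => _) _ => apply continuity_pt_const; intros ??; reflexivity
 end).

Lemma Rpower0_le_1 t y : 0 <= y -> t <= 1 -> Rpower0 t y <= 1.
Proof.
  intros Hy Ht. unfold Rpower0. destruct (Rlt_dec 0 t).
  - unfold Rpower. rewrite <- exp_0. apply exp_le.
    generalize (ln_le_minus_1 t r). intros. nra.
  - destruct (Rle_dec y 0); lra.
Qed.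

Lemma Rpower0_ge_1 t y : 0 <= y -> 1 <= t -> 1 <= Rpower0 t y.
Proof.
  intros Hy Ht. rewrite Rpower0_pos by lra. unfold Rpower. rewrite <- exp_0. apply exp_le.
  assert (0 <= ln t) by (rewrite <- ln_1; apply ln_le; lra). nra.
Qed.

Lemma Rpower0_le_exp y c : 0 <= y -> 0 < c ->
  exists K, 1 <= K /\ forall t, 0 <= t -> Rpower0 t y <= K * exp (c * t).
Proof.
  intros Hy Hc. exists (exp (Rabs (y * ln (y / c)))). split.
  - rewrite <- exp_0. apply exp_le. apply Rabs_pos.
  - intros t Ht. destruct Ht as [Ht|Ht].
    + rewrite Rpower0_pos by auto. unfold Rpower. rewrite <- exp_plus. apply exp_le.
      destruct Hy as [Hy|Hy].
      * assert (Hl : ln t = ln (c * t / y) + ln (y / c)).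
        { rewrite <- ln_mult. f_equal. field. split; lra.
          apply Rdiv_lt_0_compat; nra. apply Rdiv_lt_0_compat; lra. }
        generalize (ln_le_minus_1 (c * t / y)). intros H1.
        assert (H1' : ln (c * t / y) <= c * t / y - 1) by (apply H1; apply Rdiv_lt_0_compat; nra).
        generalize (Rle_abs (y * ln (y / c))). intros.
        rewrite Hl. assert (y * (c * t / y) = c * t) by (field; lra).
        assert (y * ln (c * t / y) <= y * (c * t / y - 1)) by (apply Rmult_le_compat_l; lra).
        nra.
      * subst y. rewrite Rmult_0_l. rewrite Rmult_0_l, Rabs_R0. nra.
    + subst t. unfold Rpower0. destruct (Rlt_dec 0 0); [lra|].
      rewrite Rmult_0_r, exp_0, Rmult_1_r.
      assert (1 <= exp (Rabs (y * ln (y / c)))) by (rewrite <- exp_0; apply exp_le, Rabs_pos).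
      destruct (Rle_dec y 0); lra.
Qed.

Lemma RInt_exp_linear K c a b : 0 < c -> a <= b ->
  @eq R (RInt (fun t => K * exp (- c * t)) a b) (K / c * (exp (- c * a) - exp (- c * b))).
Proof.
  intros Hc Hab.
  rewrite (RInt_antiderivative (fun t => - K / c * exp (- c * t))); auto.

  - field. lra.
  - intros; solve_continuity.
  - intros. apply is_derive_Reals.
    auto_derive; auto. field. lra.
Qed.

Lemma derivable_pt_lim_Rpower0 s y : 0 < s -> derivable_pt_lim (fun t => Rpower0 t y) s (y * Rpower0 s (y - 1)).
Proof.
  intros Hs. rewrite Rpower0_pos by auto.
  apply (derivable_pt_lim_ext_locally (fun t => Rpower t y)) with s; auto.
  intros t Ht. apply Rabs_def2 in Ht. rewrite Rpower0_pos; auto; lra.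
  apply derivable_pt_lim_power; auto.
Qed.

Lemma derivable_pt_lim_Rpower0_1_minus s y : s < 1 -> derivable_pt_lim (fun t => Rpower0 (1 - t) y) s (- y * Rpower0 (1 - s) (y - 1)).
Proof.
  intros Hs.
  assert (H := derivable_pt_lim_comp (fun t => 1 - t) (fun u => Rpower0 u y) s (-1) (y * Rpower0 (1 - s) (y - 1))).
  apply (derivable_pt_lim_eq _ _ _ _ (H ltac:(apply (is_derive_Reals (fun t => 1 - t)); auto_derive; auto; ring)
     ltac:(apply derivable_pt_lim_Rpower0; lra))). ring.
Qed.

Lemma Rpower0_0_r u : Rpower0 u 0 = 1.
Proof. unfold Rpower0. destruct (Rlt_dec 0 u). apply Rpower_O; auto. destruct (Rle_dec 0 0); lra. Qed.

Lemma Rpower0_0_l y : 0 < y -> Rpower0 0 y = 0.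
Proof. intros. unfold Rpower0. destruct (Rlt_dec 0 0); [lra|]. destruct (Rle_dec y 0); lra. Qed.

Lemma Rpower0_1_l y : Rpower0 1 y = 1.
Proof. rewrite Rpower0_pos by lra. unfold Rpower. rewrite ln_1, Rmult_0_r, exp_0; auto. Qed.

Lemma Rpower0_plus_1 s y : 0 < s -> Rpower0 s (y + 1) = s * Rpower0 s y.
Proof. intros. rewrite !Rpower0_pos by auto. rewrite Rpower_plus, Rpower_1 by auto. ring. Qed.

Lemma Rpower0_mult_distr a b y : 0 < a -> 0 < b -> Rpower0 (a * b) y = Rpower0 a y * Rpower0 b y.
Proof. intros. rewrite !Rpower0_pos by nra. rewrite Rpower_mult_distr; auto. Qed.

Definition gamma_integrand x t := Rpower0 t (x - 1) * exp (- t).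
Definition gamma_partial x b : R := RInt (gamma_integrand x) 0 b.

Lemma continuity_pt_gamma_integrand x t : 1 <= x -> continuity_pt (gamma_integrand x) t.
Proof. intros; unfold gamma_integrand; solve_continuity. Qed.

Lemma gamma_integrand_ge_0 x t : 0 <= gamma_integrand x t.
Proof. unfold gamma_integrand. apply Rmult_le_pos. apply Rpower0_ge_0. left; apply exp_pos. Qed.

Lemma ex_RInt_gamma_integrand x a b : 1 <= x -> ex_RInt (gamma_integrand x) a b.
Proof. intros; apply ex_RInt_continuity_pt; intros; apply continuity_pt_gamma_integrand; auto. Qed.

Lemma gamma_integrand_le_exp x c : 1 <= x -> 0 < c < 1 -> exists K, 1 <= K /\ forall t, 0 <= t -> gamma_integrand x t <= K * exp (- c * t).
Proof.
  intros Hx Hc. destruct (Rpower0_le_exp (x - 1) (1 - c)) as [K [HK1 HK2]]; try lra.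
  exists K; split; auto. intros t Ht. unfold gamma_integrand.
  replace (- c * t) with ((1 - c) * t + - t) by ring. rewrite exp_plus, <- Rmult_assoc.
  apply Rmult_le_compat_r. left; apply exp_pos. auto.
Qed.

Lemma gamma_partial_ge_0 x b : 1 <= x -> 0 <= b -> 0 <= gamma_partial x b.
Proof. intros; apply RInt_ge_0; auto. apply ex_RInt_gamma_integrand; auto. intros; apply gamma_integrand_ge_0. Qed.

Lemma gamma_partial_Chasles x a b : 1 <= x -> gamma_partial x b = gamma_partial x a + RInt (gamma_integrand x) a b.
Proof. intros; unfold gamma_partial; apply RInt_Chasles_R; apply ex_RInt_gamma_integrand; auto. Qed.

Lemma gamma_partial_le x b1 b2 : 1 <= x -> 0 <= b1 <= b2 -> gamma_partial x b1 <= gamma_partial x b2.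
Proof.
  intros. rewrite (gamma_partial_Chasles x b1 b2); auto.
  assert (0 <= RInt (gamma_integrand x) b1 b2) by (apply RInt_ge_0; [lra|apply ex_RInt_gamma_integrand; auto|intros; apply gamma_integrand_ge_0]).
  lra.
Qed.

Lemma gamma_partial_bounded x : 1 <= x -> exists B, forall b, 0 <= b -> gamma_partial x b <= B.
Proof.
  intros Hx. destruct (gamma_integrand_le_exp x (1/2)) as [K [HK1 HK2]]; auto; try lra.
  exists (K / (1/2)). intros b Hb. unfold gamma_partial.
  apply Rle_trans with (RInt (fun t => K * exp (- (1/2) * t)) 0 b).
  - apply RInt_le; auto. apply ex_RInt_gamma_integrand; auto. apply ex_RInt_continuity_pt; intros; solve_continuity.
    intros; apply HK2; lra.
  - rewrite RInt_exp_linear by lra. rewrite Rmult_0_r, exp_0.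
    assert (0 < exp (- (1/2) * b)) by apply exp_pos.
    assert (0 < K / (1/2)) by (apply Rdiv_lt_0_compat; lra).
    nra.
Qed.

Definition gamma_partials x := fun v => exists b, 0 <= b /\ v = gamma_partial x b.

Lemma gamma_partials_bound x : 1 <= x -> bound (gamma_partials x).
Proof.
  intros Hx. destruct (gamma_partial_bounded x Hx) as [B HB]. exists B.
  intros v [b [Hb ->]]. auto.
Qed.

Lemma gamma_partials_inhabited x : exists v, gamma_partials x v.
Proof. exists (gamma_partial x 0). exists 0; split; [lra|auto]. Qed.

(* Gamma(x) is the supremum of the increasing partial integrals; only x >= 1 is needed, where
   the integrand is continuous at 0, and 0 is a junk value elsewhere. *)
Definition Gamma x : R :=
  match Rle_dec 1 x with
  | left H => proj1_sig (completeness (gamma_partials x) (gamma_partials_bound x H) (gamma_partials_inhabited x))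
  | right _ => 0 end.

Lemma Gamma_lub x : 1 <= x -> is_lub (gamma_partials x) (Gamma x).
Proof.
  intros Hx. unfold Gamma. destruct (Rle_dec 1 x); [|lra].
  destruct (completeness _ _ _); simpl; auto.
Qed.

Lemma gamma_partial_cv x : 1 <= x -> forall e, 0 < e ->
  exists B, 0 <= B /\ forall b, B <= b -> Rabs (gamma_partial x b - Gamma x) < e.
Proof.
  intros Hx e He. destruct (Gamma_lub x Hx) as [Hub Hleast].
  assert (exists b0, 0 <= b0 /\ Gamma x - e < gamma_partial x b0).
  { apply NNPP. intros Hn.
    assert (is_upper_bound (gamma_partials x) (Gamma x - e)).
    { intros v [b [Hb ->]]. apply Rnot_lt_le. intros Hlt. apply Hn. exists b; auto. }
    specialize (Hleast _ H). lra. }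
  destruct H as [b0 [Hb0 H0]]. exists b0; split; auto.
  intros b Hb. assert (gamma_partial x b0 <= gamma_partial x b) by (apply gamma_partial_le; lra).
  assert (gamma_partial x b <= Gamma x) by (apply Hub; exists b; split; [lra|auto]).
  apply Rabs_def1; lra.
Qed.

Lemma Gamma_unique x L : 1 <= x ->
  (forall e, 0 < e -> exists B, forall b, B <= b -> Rabs (gamma_partial x b - L) < e) -> Gamma x = L.
Proof.
  intros Hx H. apply Rminus_diag_uniq, Rabs_lt_all_eq_0. intros e He.
  destruct (H (e/2)) as [B1 H1]; [lra|].
  destruct (gamma_partial_cv x Hx (e/2)) as [B2 [_ H2]]; [lra|].
  specialize (H1 (Rmax B1 B2) (Rmax_l _ _)). specialize (H2 (Rmax B1 B2) (Rmax_r _ _)).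
  apply Rabs_lt_inv in H1. apply Rabs_lt_inv in H2. apply Rabs_def1; lra.
Qed.

Lemma Gamma_pos x : 1 <= x -> 0 < Gamma x.
Proof.
  intros Hx. destruct (Gamma_lub x Hx) as [Hub _].
  assert (gamma_partial x 2 <= Gamma x) by (apply Hub; exists 2; split; [lra|auto]).
  rewrite (gamma_partial_Chasles x 1 2) in H by auto.
  assert (0 <= gamma_partial x 1) by (apply gamma_partial_ge_0; lra).
  assert (RInt (fun _ => exp (-2)) 1 2 <= RInt (gamma_integrand x) 1 2).
  { apply RInt_le; try lra. apply ex_RInt_continuity_pt; intros; solve_continuity. apply ex_RInt_gamma_integrand; auto.
    intros t Ht. unfold gamma_integrand. rewrite <- (Rmult_1_l (exp (-2))).
    apply Rmult_le_compat. lra. left; apply exp_pos. apply Rpower0_ge_1; lra. apply exp_le; lra. }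
  rewrite RInt_const in H1. unfold scal in H1; simpl in H1. unfold mult in H1; simpl in H1.
  assert (0 < exp (-2)) by apply exp_pos. lra.
Qed.

Lemma is_Gamma_Gamma s G : 1 <= s -> is_Gamma s G -> G = Gamma s.
Proof.
  intros Hs HG. apply Rminus_diag_uniq, Rabs_lt_all_eq_0. intros e He.
  destruct (HG (e/3)) as [d [M [Hd [HM H1]]]]; [lra|].
  destruct (gamma_partial_cv s Hs (e/3)) as [B [HB H2]]; [lra|].
  set (a := Rmin (d/2) (Rmin (e/3) (1/2))).
  assert (Ha0 : 0 < a) by (unfold a; repeat apply Rmin_glb_lt; lra).
  assert (Ha1 : a < d) by (unfold a; eapply Rle_lt_trans; [apply Rmin_l|lra]).
  assert (Ha2 : a <= e/3) by (unfold a; eapply Rle_trans; [apply Rmin_r|apply Rmin_l]).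
  assert (Ha3 : a <= 1/2) by (unfold a; eapply Rle_trans; [apply Rmin_r|apply Rmin_r]).
  set (b := Rmax (M + 1) (B + 1)).
  assert (Hb1 : M < b) by (unfold b; generalize (Rmax_l (M+1) (B+1)); lra).
  assert (Hb2 : B <= b) by (unfold b; generalize (Rmax_r (M+1) (B+1)); lra).
  assert (Hb3 : 1 <= b) by (unfold b; generalize (Rmax_l (M+1) (B+1)); lra).
  specialize (H1 a b (conj Ha0 Ha1) Hb1). specialize (H2 b Hb2).
  assert (Heq : Defs.RInt (fun t => Rpower t (s - 1) * exp (- t)) a b = RInt (gamma_integrand s) a b).
  { assert (Hext : forall t, Rmin a b < t < Rmax a b -> gamma_integrand s t = Rpower t (s - 1) * exp (- t)).
    { intros t Ht. rewrite Rmin_left, Rmax_right in Ht by lra. unfold gamma_integrand. rewrite Rpower0_pos; auto. lra. }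
    rewrite Defs_RInt_eq. symmetry; apply RInt_ext; auto.
    apply (ex_RInt_ext (V:=R_CompleteNormedModule) (gamma_integrand s)); auto. apply ex_RInt_gamma_integrand; auto. }
  rewrite Heq in H1. rewrite (gamma_partial_Chasles s a b) in H2 by auto.
  assert (0 <= gamma_partial s a) by (apply gamma_partial_ge_0; lra).
  assert (gamma_partial s a <= a).
  { unfold gamma_partial. apply Rle_trans with (RInt (fun _ => 1) 0 a).
    apply RInt_le; try lra. apply ex_RInt_gamma_integrand; auto. apply ex_RInt_continuity_pt; intros; solve_continuity.
    intros t Ht. unfold gamma_integrand. rewrite <- (Rmult_1_l 1). apply Rmult_le_compat.
    apply Rpower0_ge_0. left; apply exp_pos. apply Rpower0_le_1; lra. rewrite <- exp_0; apply exp_le; lra.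
    rewrite RInt_const. unfold scal; simpl; unfold mult; simpl. lra. }
  apply Rabs_lt_inv in H1. apply Rabs_lt_inv in H2. apply Rabs_def1; lra.
Qed.

(** * The Beta function and the Beta-Gamma relation *)

Definition beta_integrand x y s := Rpower0 s (x - 1) * Rpower0 (1 - s) (y - 1).
Definition Beta x y : R := RInt (beta_integrand x y) 0 1.

Lemma continuity_pt_beta_integrand x y s : 1 <= x -> 1 <= y -> continuity_pt (beta_integrand x y) s.
Proof. intros; unfold beta_integrand; solve_continuity. Qed.

Lemma ex_RInt_beta_integrand x y a b : 1 <= x -> 1 <= y -> ex_RInt (beta_integrand x y) a b.
Proof. intros; apply ex_RInt_continuity_pt; intros; apply continuity_pt_beta_integrand; auto. Qed.

Lemma Beta_succ_r x y : 1 <= x -> 1 <= y -> (x + y) * Beta x (y + 1) = y * Beta x y.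
Proof.
  intros Hx Hy.
  set (F := fun s => Rpower0 s x * Rpower0 (1 - s) y).
  set (f := fun s => x * Rpower0 s (x - 1) * Rpower0 (1 - s) y - y * Rpower0 s x * Rpower0 (1 - s) (y - 1)).
  assert (H0 : @eq R (RInt f 0 1) (F 1 - F 0)).
  { apply RInt_antiderivative_open; try lra.
    - intros; unfold f; solve_continuity.
    - intros s Hs. unfold F, f.
      eapply derivable_pt_lim_eq. apply derivable_pt_lim_mult. apply derivable_pt_lim_Rpower0; lra. apply derivable_pt_lim_Rpower0_1_minus; lra. cbv beta; ring.
    - unfold F; solve_continuity.
    - unfold F; solve_continuity. }
  unfold F in H0. rewrite Rpower0_0_l in H0 by lra. replace (1 - 1) with 0 in H0 by ring.
  rewrite Rpower0_0_l in H0 by lra. rewrite Rmult_0_r, Rmult_0_l, Rminus_0_r in H0.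
  assert (H1 : @eq R (RInt f 0 1) (RInt (fun s => (x + y) * beta_integrand x (y + 1) s - y * beta_integrand x y s) 0 1)).
  { apply RInt_ext_R. intros s Hs. rewrite Rmin_left, Rmax_right in Hs by lra.
    unfold f, beta_integrand. replace (y + 1 - 1) with y by ring.
    assert (E1 : Rpower0 s x = s * Rpower0 s (x - 1)) by (rewrite <- Rpower0_plus_1; [f_equal; ring | lra]).
    assert (E2 : Rpower0 (1 - s) y = (1 - s) * Rpower0 (1 - s) (y - 1)) by (rewrite <- Rpower0_plus_1; [f_equal; ring | lra]).
    rewrite E1, E2. ring. }
  rewrite H1, RInt_scal_minus in H0 by (apply ex_RInt_beta_integrand; lra).
  unfold Beta. lra.
Qed.

Lemma Beta_1_r x : 1 <= x -> Beta x 1 = / x.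
Proof.
  intros Hx. unfold Beta.
  assert (H1 : @eq R (RInt (beta_integrand x 1) 0 1) (RInt (fun s => Rpower0 s (x - 1)) 0 1)).
  { apply RInt_ext_R. intros. unfold beta_integrand. replace (1 - 1) with 0 by ring. rewrite Rpower0_0_r. ring. }
  rewrite H1. rewrite (RInt_antiderivative_open (fun s => Rpower0 s x / x)); try lra.
  - rewrite Rpower0_1_l, Rpower0_0_l by lra. field. lra.
  - intros; solve_continuity.
  - intros s Hs. eapply derivable_pt_lim_eq.
    apply (derivable_pt_lim_div (fun t => Rpower0 t x) (fun _ => x)). apply derivable_pt_lim_Rpower0; lra.
    apply derivable_pt_lim_const. lra. unfold Rsqr. field. lra.
  - solve_continuity.
  - solve_continuity.
Qed.

Lemma Gamma_1 : Gamma 1 = 1.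
Proof.
  apply Gamma_unique; [lra|]. intros e He. exists (Rmax 0 (/ e)). intros b Hb.
  assert (Hb0 : 0 <= b) by (eapply Rle_trans; [apply Rmax_l|apply Hb]).
  assert (Hbe : / e <= b) by (eapply Rle_trans; [apply Rmax_r|apply Hb]).
  unfold gamma_partial.
  assert (H1 : @eq R (RInt (gamma_integrand 1) 0 b) (RInt (fun t => 1 * exp (- (1) * t)) 0 b)).
  { apply RInt_ext_R; intros. unfold gamma_integrand. replace (1 - 1) with 0 by ring. rewrite Rpower0_0_r. f_equal; f_equal; ring. }
  rewrite H1, (RInt_exp_linear 1 1 0 b) by lra. rewrite Rmult_0_r, exp_0.
  replace (- (1) * b) with (- b) by ring.
  assert (1 + b <= exp b) by apply exp_ineq1_le.
  assert (exp (- b) * exp b = 1) by (rewrite <- exp_plus; replace (- b + b) with 0 by ring; apply exp_0).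
  assert (0 < exp (- b)) by apply exp_pos.
  assert (e * b >= 1) by (apply Rle_ge; apply Rmult_le_reg_l with (/ e);
    [apply Rinv_0_lt_compat; auto| rewrite <- Rmult_assoc, Rinv_l, Rmult_1_l, Rmult_1_r; lra]).
  replace (1 / 1 * (1 - exp (- b)) - 1) with (- exp (- b)) by field.
  rewrite Rabs_Ropp, Rabs_pos_eq by lra. nra.
Qed.

Lemma Rpower0_1_minus_approx_exp M t : 2 <= M -> 0 < t <= M / 2 ->
  Rabs (Rpower0 (1 - t / M) (M - 1) - exp (- t)) <= exp (- t) * ((2 * t + 2 * t ^ 2) / M).
Proof.
  intros HM Ht. set (u := t / M).
  assert (Hu : 0 < u <= 1/2).
  { unfold u; split. apply Rdiv_lt_0_compat; lra.
    apply Rmult_le_reg_l with M; [lra|]. field_simplify; lra. }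
  assert (HtM : t = M * u) by (unfold u; field; lra).
  rewrite Rpower0_pos by lra. unfold Rpower.
  assert (Lup : ln (1 - u) <= - u) by (generalize (ln_le_minus_1 (1 - u)); intros; apply Rle_trans with (1 - u - 1); [apply H; lra|lra]).
  assert (Llo := ln_1_minus_ge u ltac:(lra)).
  assert (E1 : exp ((M - 1) * ln (1 - u)) <= exp (- t) * exp u).
  { rewrite <- exp_plus. apply exp_le. rewrite HtM. nra. }
  assert (E2 : exp (- t) * exp (- (2 * t ^ 2 / M)) <= exp ((M - 1) * ln (1 - u))).
  { rewrite <- exp_plus. apply exp_le. rewrite HtM.
    replace (- (M * u) + - (2 * (M * u) ^ 2 / M)) with (M * (- u - 2 * u ^ 2)) by (field; lra).
    assert (- u - 2 * u ^ 2 <= 0) by nra. nra. }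
  assert (E3 : exp u <= 1 + 2 * u) by (apply exp_le_1_plus_2x; lra).
  assert (E4 : 1 - 2 * t ^ 2 / M <= exp (- (2 * t ^ 2 / M))) by (generalize (exp_ineq1_le (- (2 * t ^ 2 / M))); lra).
  assert (Ee : 0 < exp (- t)) by apply exp_pos.
  assert (Hut : 2 * u = 2 * t / M) by (unfold u; field; lra).
  assert (Hq : 0 <= 2 * t ^ 2 / M) by (apply Rmult_le_pos; [nra| left; apply Rinv_0_lt_compat; lra]).
  assert (Hq2 : 0 <= 2 * t / M) by (apply Rmult_le_pos; [nra| left; apply Rinv_0_lt_compat; lra]).
  replace ((2 * t + 2 * t ^ 2) / M) with (2 * t / M + 2 * t ^ 2 / M) by (field; lra).
  apply Rabs_le. split.
  - assert (exp (- t) * (1 - 2 * t ^ 2 / M) <= exp (- t) * exp (- (2 * t ^ 2 / M))) by (apply Rmult_le_compat_l; lra).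
    nra.
  - assert (exp (- t) * exp u <= exp (- t) * (1 + 2 * u)) by (apply Rmult_le_compat_l; lra).
    nra.
Qed.

Lemma Rpower0_1_minus_le_exp M t : 2 <= M -> 0 <= t < M -> Rpower0 (1 - t / M) (M - 1) <= exp (- t / 2).
Proof.
  intros HM Ht. set (u := t / M).
  assert (Hu : 0 <= u < 1).
  { unfold u; split. apply Rmult_le_pos; [lra| left; apply Rinv_0_lt_compat; lra].
    apply Rmult_lt_reg_l with M; [lra|]. field_simplify; lra. }
  assert (HtM : t = M * u) by (unfold u; field; lra).
  rewrite Rpower0_pos by lra. unfold Rpower. apply exp_le.
  assert (Lup : ln (1 - u) <= - u) by (generalize (ln_le_minus_1 (1 - u)); intros; apply Rle_trans with (1 - u - 1); [apply H; lra|lra]).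
  rewrite HtM. nra.
Qed.

Definition beta_rescaled_integrand x M t := Rpower0 t (x - 1) * Rpower0 (1 - t / M) (M - 1).

Lemma continuity_pt_beta_rescaled_integrand x M t : 1 <= x -> 1 <= M -> continuity_pt (beta_rescaled_integrand x M) t.
Proof. intros; unfold beta_rescaled_integrand; solve_continuity. Qed.

Lemma Beta_rescale x M : 1 <= x -> 2 <= M -> Rpower M x * Beta x M = RInt (beta_rescaled_integrand x M) 0 M.
Proof.
  intros Hx HM. unfold Beta.
  assert (H := RInt_comp_lin (V:=R_CompleteNormedModule) (beta_integrand x M) (/ M) 0 0 M (ex_RInt_beta_integrand x M _ _ Hx ltac:(lra))).
  replace (/ M * 0 + 0) with 0 in H by ring. replace (/ M * M + 0) with 1 in H by (field; lra).
  simpl in H. rewrite <- H.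
  change (scal (/ M)) with (fun v : R => / M * v) in H.
  assert (Hex : ex_RInt (fun y => beta_integrand x M (/ M * y + 0)) 0 M).
  { apply ex_RInt_continuity_pt. intros. unfold beta_integrand. solve_continuity. }
  rewrite <- RInt_scal_R.
  2:{ apply (ex_RInt_ext_R (fun y => / M * beta_integrand x M (/ M * y + 0))). intros; reflexivity.
      apply ex_RInt_continuity_pt. intros. unfold beta_integrand. solve_continuity. }
  symmetry. apply RInt_ext_R. intros t Ht. rewrite Rmin_left, Rmax_right in Ht by lra.
  unfold beta_rescaled_integrand, beta_integrand, scal; simpl; unfold mult; simpl.
  replace (/ M * t + 0) with (t * / M) by ring.
  rewrite Rpower0_mult_distr by (try apply Rinv_0_lt_compat; lra).
  rewrite (Rpower0_pos (/ M)) by (apply Rinv_0_lt_compat; lra).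
  assert (Ex : Rpower M x = M * Rpower M (x - 1)).
  { replace (Rpower M x) with (Rpower M ((x - 1) + 1)) by (f_equal; ring).
    rewrite Rpower_plus, Rpower_1 by lra. ring. }
  rewrite Ex.
  assert (Ei : Rpower (/ M) (x - 1) = / Rpower M (x - 1)).
  { unfold Rpower. rewrite ln_Rinv by lra. rewrite <- exp_Ropp. f_equal; ring. }
  rewrite Ei. replace (1 - t * / M) with (1 - t / M) by (unfold Rdiv; ring).
  assert (0 < Rpower M (x - 1)) by apply Rpower_pos.
  field. lra.
Qed.

Lemma beta_rescaled_error_near x M t K1 : 1 <= x -> 2 <= M -> 0 < t <= M / 2 ->
  (forall t, 0 <= t -> Rpower0 t (x - 1) * (2 * t + 2 * t ^ 2) <= K1 * exp (1/2 * t)) ->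
  Rabs (beta_rescaled_integrand x M t - gamma_integrand x t) <= K1 / M * exp (- (1/2) * t).
Proof.
  intros Hx HM Ht HK. unfold beta_rescaled_integrand, gamma_integrand.
  replace (Rpower0 t (x - 1) * Rpower0 (1 - t / M) (M - 1) - Rpower0 t (x - 1) * exp (- t))
    with (Rpower0 t (x - 1) * (Rpower0 (1 - t / M) (M - 1) - exp (- t))) by ring.
  rewrite Rabs_mult, (Rabs_pos_eq (Rpower0 t (x - 1))) by apply Rpower0_ge_0.
  apply Rle_trans with (Rpower0 t (x - 1) * (exp (- t) * ((2 * t + 2 * t ^ 2) / M))).
  apply Rmult_le_compat_l. apply Rpower0_ge_0. apply Rpower0_1_minus_approx_exp; auto.
  specialize (HK t ltac:(lra)).
  assert (Hee : exp (- t) * exp (1/2 * t) = exp (- (1/2) * t)).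
  { rewrite <- exp_plus. f_equal. field. }
  assert (0 < exp (- t)) by apply exp_pos.
  replace (Rpower0 t (x - 1) * (exp (- t) * ((2 * t + 2 * t ^ 2) / M)))
    with (exp (- t) / M * (Rpower0 t (x - 1) * (2 * t + 2 * t ^ 2))) by (field; lra).
  apply Rle_trans with (exp (- t) / M * (K1 * exp (1 / 2 * t))).
  apply Rmult_le_compat_l; auto. apply Rmult_le_pos; [lra| left; apply Rinv_0_lt_compat; lra].
  rewrite <- Hee. right. field. lra.
Qed.

Lemma beta_rescaled_error_far x M t Kc : 1 <= x -> 2 <= M -> 0 <= t < M ->
  (forall t, 0 <= t -> Rpower0 t (x - 1) <= Kc * exp (1/4 * t)) ->
  Rabs (beta_rescaled_integrand x M t - gamma_integrand x t) <= 2 * Kc * exp (- (1/4) * t).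
Proof.
  intros Hx HM Ht HK. unfold beta_rescaled_integrand, gamma_integrand.
  assert (H1 := Rpower0_1_minus_le_exp M t HM Ht).
  assert (H2 : exp (- t) <= exp (- t / 2)) by (apply exp_le; lra).
  assert (H3 := Rpower0_ge_0 t (x - 1)). assert (H4 := Rpower0_ge_0 (1 - t / M) (M - 1)).
  assert (H5 : 0 < exp (- t)) by apply exp_pos.
  specialize (HK t ltac:(lra)).
  assert (Hee : exp (1/4 * t) * exp (- t / 2) = exp (- (1/4) * t)) by (rewrite <- exp_plus; f_equal; field).
  assert (0 < exp (- t / 2)) by apply exp_pos.
  apply Rle_trans with (2 * (Rpower0 t (x - 1) * exp (- t / 2))).
  - apply Rabs_le; split; nra.
  - rewrite <- Hee. nra.
Qed.

Lemma Rpower0_poly_le_exp x : 1 <= x -> exists K, 0 <= K /\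
  forall t, 0 <= t -> Rpower0 t (x - 1) * (2 * t + 2 * t ^ 2) <= K * exp (1/2 * t).
Proof.
  intros Hx.
  destruct (Rpower0_le_exp x (1/2)) as [Ka [Ka1 Ka2]]; try lra.
  destruct (Rpower0_le_exp (x + 1) (1/2)) as [Kb [Kb1 Kb2]]; try lra.
  exists (2 * (Ka + Kb)); split; [lra|].
  intros t [Ht|<-].
  - assert (E1 : Rpower0 t x = t * Rpower0 t (x - 1)) by (rewrite <- Rpower0_plus_1; [f_equal; ring| lra]).
    assert (E2 : Rpower0 t (x + 1) = t * Rpower0 t x) by (rewrite <- Rpower0_plus_1; [f_equal; ring| lra]).
    specialize (Ka2 t ltac:(lra)). specialize (Kb2 t ltac:(lra)). nra.
  - assert (0 < exp (1/2 * 0)) by apply exp_pos. nra.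
Qed.

Lemma ex_RInt_beta_rescaled_error x M a b : 1 <= x -> 1 <= M ->
  ex_RInt (fun t => beta_rescaled_integrand x M t - gamma_integrand x t) a b.
Proof.
  intros. apply ex_RInt_continuity_pt; intros.
  apply (continuity_pt_minus (beta_rescaled_integrand x M) (gamma_integrand x));
    [apply continuity_pt_beta_rescaled_integrand|apply continuity_pt_gamma_integrand]; lra.
Qed.

Lemma ex_RInt_abs_beta_rescaled_error x M a b : 1 <= x -> 1 <= M ->
  ex_RInt (fun t => Rabs (beta_rescaled_integrand x M t - gamma_integrand x t)) a b.
Proof.
  intros. apply ex_RInt_continuity_pt; intros.
  apply (continuity_pt_comp_total (fun t => beta_rescaled_integrand x M t - gamma_integrand x t) Rabs);
    [|apply Rcontinuity_abs].
  apply (continuity_pt_minus (beta_rescaled_integrand x M) (gamma_integrand x));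
    [apply continuity_pt_beta_rescaled_integrand|apply continuity_pt_gamma_integrand]; lra.
Qed.

Lemma RInt_beta_rescaled_error_near x : 1 <= x -> exists K, 0 <= K /\ forall M, 2 <= M ->
  Rabs (RInt (fun t => beta_rescaled_integrand x M t - gamma_integrand x t) 0 (M / 2)) <= K / M.
Proof.
  intros Hx. destruct (Rpower0_poly_le_exp x Hx) as [K [HK0 HK]].
  exists (2 * K); split; [lra|]. intros M HM.
  eapply Rle_trans; [apply abs_RInt_le; [lra|apply ex_RInt_beta_rescaled_error; lra] |].
  apply Rle_trans with (RInt (fun t => K / M * exp (- (1/2) * t)) 0 (M/2)).
  - apply RInt_le; [lra|apply ex_RInt_abs_beta_rescaled_error; lra| |].
    + apply ex_RInt_continuity_pt; intros; solve_continuity.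
    + intros t Ht. apply beta_rescaled_error_near; auto; lra.
  - rewrite RInt_exp_linear by lra. rewrite Rmult_0_r, exp_0.
    assert (0 < exp (- (1/2) * (M / 2))) by apply exp_pos.
    assert (0 <= K / M) by (apply Rmult_le_pos; auto; left; apply Rinv_0_lt_compat; lra).
    replace (2 * K / M) with (K / M / (1/2) * 1) by (field; lra).
    apply Rmult_le_compat_l; [apply Rmult_le_pos|]; lra.
Qed.

Lemma RInt_beta_rescaled_error_far x : 1 <= x -> exists K, 0 <= K /\ forall M, 2 <= M ->
  Rabs (RInt (fun t => beta_rescaled_integrand x M t - gamma_integrand x t) (M / 2) M) <= K / M.
Proof.
  intros Hx. destruct (Rpower0_le_exp (x - 1) (1/4)) as [K [HK1 HK]]; try lra.
  exists (64 * K); split; [lra|]. intros M HM.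
  eapply Rle_trans; [apply abs_RInt_le; [lra|apply ex_RInt_beta_rescaled_error; lra] |].
  apply Rle_trans with (RInt (fun t => 2 * K * exp (- (1/4) * t)) (M/2) M).
  - apply RInt_le; [lra|apply ex_RInt_abs_beta_rescaled_error; lra| |].
    + apply ex_RInt_continuity_pt; intros; solve_continuity.
    + intros t Ht. apply beta_rescaled_error_far; auto; lra.
  - rewrite RInt_exp_linear by lra.
    assert (0 < exp (- (1/4) * M)) by apply exp_pos.
    assert (H8 := exp_neg_le_inv (M / 8) ltac:(lra)).
    replace (- (1/4) * (M / 2)) with (- (M / 8)) by field.
    replace (/ (M / 8)) with (8 / M) in H8 by (field; lra).
    replace (64 * K / M) with (2 * K / (1/4) * (8 / M)) by (field; lra).
    apply Rmult_le_compat_l; lra.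
Qed.

Lemma Beta_rescale_error x : 1 <= x -> exists K, 0 <= K /\ forall M, 2 <= M ->
  Rabs (Rpower M x * Beta x M - gamma_partial x M) <= K / M.
Proof.
  intros Hx.
  destruct (RInt_beta_rescaled_error_near x Hx) as [K1 [HK1 H1]].
  destruct (RInt_beta_rescaled_error_far x Hx) as [K2 [HK2 H2]].
  exists (K1 + K2); split; [lra|]. intros M HM.
  rewrite Beta_rescale by auto. unfold gamma_partial.
  rewrite <- (Rmult_1_l (RInt (beta_rescaled_integrand x M) 0 M)),
    <- (Rmult_1_l (RInt (gamma_integrand x) 0 M)), <- RInt_scal_minus;
    [| apply ex_RInt_continuity_pt; intros; apply continuity_pt_beta_rescaled_integrand; lra
     | apply ex_RInt_gamma_integrand; auto].
  rewrite (RInt_ext_R _ (fun t => beta_rescaled_integrand x M t - gamma_integrand x t))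
    by (intros; ring).
  rewrite (RInt_Chasles_R _ 0 (M / 2) M) by (apply ex_RInt_beta_rescaled_error; lra).
  eapply Rle_trans; [apply Rabs_triang|].
  replace ((K1 + K2) / M) with (K1 / M + K2 / M) by (field; lra).
  apply Rplus_le_compat; auto.
Qed.

Lemma Beta_Gamma_asymptotic x : 1 <= x -> forall e, 0 < e ->
  exists M0, 2 <= M0 /\ forall M, M0 <= M -> Rabs (Rpower M x * Beta x M - Gamma x) < e.
Proof.
  intros Hx e He.
  destruct (Beta_rescale_error x Hx) as [K [HK0 HK]].
  destruct (gamma_partial_cv x Hx (e/2)) as [B [HB HBl]]; [lra|].
  exists (Rmax 2 (Rmax B (2 * K / e + 1))); split; [apply Rmax_l|].
  intros M HM.
  assert (H2 : 2 <= M) by (eapply Rle_trans; [apply Rmax_l|apply HM]).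
  assert (HBM : B <= M) by (eapply Rle_trans; [|apply HM]; eapply Rle_trans; [apply Rmax_l|apply Rmax_r]).
  assert (HKM : 2 * K / e + 1 <= M) by (eapply Rle_trans; [|apply HM]; eapply Rle_trans; [apply Rmax_r|apply Rmax_r]).
  assert (Hsmall : K / M < e / 2).
  { apply Rmult_lt_reg_l with (2 * M / e); [apply Rdiv_lt_0_compat; lra|].
    replace (2 * M / e * (K / M)) with (2 * K / e) by (field; lra).
    replace (2 * M / e * (e / 2)) with M by (field; lra). lra. }
  specialize (HK M H2). specialize (HBl M HBM).
  apply Rabs_le_inv in HK. apply Rabs_lt_inv in HBl. apply Rabs_def1; lra.
Qed.

Lemma Beta_telescoping a b (N : nat) : 1 <= a -> 1 <= b ->
  Beta a b * Beta (a + b) (INR N + 1) * (a + b + INR N) =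
  Beta a (b + INR N) * Beta b (INR N + 1) * (b + INR N).
Proof.
  intros Ha Hb. induction N as [|N IH].
  - simpl. rewrite !Rplus_0_r, Rplus_0_l, !Beta_1_r by lra. field. lra.
  - rewrite S_INR. assert (HN := pos_INR N). set (n := INR N) in *.
    assert (h1 := Beta_succ_r (a + b) (n + 1) ltac:(lra) ltac:(lra)).
    assert (h2 := Beta_succ_r a (b + n) ltac:(lra) ltac:(lra)).
    assert (h3 := Beta_succ_r b (n + 1) ltac:(lra) ltac:(lra)).
    replace (b + (n + 1)) with (b + n + 1) by ring.
    set (B0 := Beta a b) in *. set (X := Beta (a + b) (n + 1)) in *. set (X' := Beta (a + b) (n + 1 + 1)) in *.
    set (Y := Beta a (b + n)) in *. set (Y' := Beta a (b + n + 1)) in *.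
    set (Z := Beta b (n + 1)) in *. set (Z' := Beta b (n + 1 + 1)) in *.
    assert (E1 : B0 * X' * (a + b + (n + 1)) = B0 * (n + 1) * X) by (transitivity (B0 * ((a + b + (n + 1)) * X')); [ring| rewrite h1; ring]).
    assert (E2 : Y' * Z' * (b + n + 1) = Y' * (n + 1) * Z) by (transitivity (Y' * ((b + (n + 1)) * Z')); [ring| rewrite h3; ring]).
    rewrite E1, E2.
    assert (E3 : B0 * X = Y' * Z).
    { apply Rmult_eq_reg_l with (a + b + n); [|lra].
      replace ((a + b + n) * (B0 * X)) with (B0 * X * (a + b + n)) by ring. rewrite IH.
      replace ((a + b + n) * (Y' * Z)) with (((a + b + n) * Y') * Z) by ring.
      replace (a + (b + n)) with (a + b + n) in h2 by ring. rewrite h2. ring. }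
    replace (B0 * (n + 1) * X) with ((n + 1) * (B0 * X)) by ring. rewrite E3. ring.
Qed.

Lemma Un_cv_div_INR_plus c d : 1 <= d -> Un_cv (fun N => c / (INR N + d)) 0.
Proof.
  intros Hd e He. destruct (INR_unbounded (Rabs c / e)) as [N0 HN0].
  exists N0. intros n Hn. unfold Rdist. rewrite Rminus_0_r.
  assert (Hn' : INR N0 <= INR n) by (apply le_INR; lia).
  assert (Hp : 0 < INR n + d) by (generalize (pos_INR n); lra).
  unfold Rdiv. rewrite Rabs_mult, Rabs_inv, (Rabs_pos_eq (INR n + d)) by lra.
  apply Rmult_lt_reg_l with (INR n + d); auto.
  replace ((INR n + d) * (Rabs c * / (INR n + d))) with (Rabs c) by (field; lra).
  assert (Rabs c < e * (INR n + d)).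
  { apply Rmult_lt_reg_l with (/ e). apply Rinv_0_lt_compat; auto.
    replace (/ e * (e * (INR n + d))) with (INR n + d) by (field; lra).
    unfold Rdiv in HN0. rewrite Rmult_comm. lra. }
  lra.
Qed.

Lemma Un_cv_const c : Un_cv (fun _ => c) c.
Proof. intros e He; exists 0%nat; intros; unfold Rdist; rewrite Rminus_eq_0, Rabs_R0; auto. Qed.

Lemma Un_cv_1_plus_div_INR_plus c d : 1 <= d -> Un_cv (fun N => 1 + c / (INR N + d)) 1.
Proof.
  intros Hd. assert (H := CV_plus (fun _ => 1) _ 1 0 (Un_cv_const 1) (Un_cv_div_INR_plus c d Hd)).
  rewrite Rplus_0_r in H. exact H.
Qed.

Lemma Beta_Gamma_asymptotic_seq x (m : nat -> R) : 1 <= x -> (forall N, INR N <= m N) ->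
  Un_cv (fun N => Rpower (m N) x * Beta x (m N)) (Gamma x).
Proof.
  intros Hx Hm e He. destruct (Beta_Gamma_asymptotic x Hx e He) as [M0 [HM0 H]].
  destruct (INR_unbounded M0) as [N0 HN0]. exists N0. intros n Hn.
  unfold Rdist. apply H. apply Rle_trans with (INR n); auto.
  apply Rle_trans with (INR N0). lra. apply le_INR; lia.
Qed.

(* The telescoping identity B(a,b) B(a+b,N+1) (a+b+N) = B(a,b+N) B(b,N+1) (b+N), rescaled by
   powers of N, becomes B(a,b) Gamma(a+b) = Gamma(a) Gamma(b) in the limit by Gauss' formula. *)
Theorem Beta_Gamma a b : 1 <= a -> 1 <= b -> Beta a b * Gamma (a + b) = Gamma a * Gamma b.
Proof.
  intros Ha Hb.
  set (u := fun N : nat => INR N + 1). set (w := fun N : nat => b + INR N).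
  set (X := fun N => Rpower (u N) (a + b) * Beta (a + b) (u N)).
  set (Y := fun N => Rpower (w N) a * Beta a (w N)).
  set (Z := fun N => Rpower (u N) b * Beta b (u N)).
  set (r := fun N => 1 + a / (INR N + b)).
  set (q := fun N => Rpower (1 + (b - 1) / (INR N + 1)) a).
  assert (HX : Un_cv X (Gamma (a + b))) by (apply Beta_Gamma_asymptotic_seq; [lra| intros; unfold u; lra]).
  assert (HY : Un_cv Y (Gamma a)) by (apply Beta_Gamma_asymptotic_seq; [lra| intros; unfold w; lra]).
  assert (HZ : Un_cv Z (Gamma b)) by (apply Beta_Gamma_asymptotic_seq; [lra| intros; unfold u; lra]).
  assert (Hr : Un_cv r 1) by (apply Un_cv_1_plus_div_INR_plus; lra).
  assert (Hq : Un_cv q 1).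
  { assert (H := continuity_seq (fun t => Rpower t a) _ 1 (continuity_pt_Rpower 1 a ltac:(lra))
      (Un_cv_1_plus_div_INR_plus (b - 1) 1 ltac:(lra))).
    unfold Rpower at 2 in H. rewrite ln_1, Rmult_0_r, exp_0 in H. exact H. }
  assert (Heq : forall N, Beta a b * X N * r N * q N = Y N * Z N).
  { intros N. assert (HN := pos_INR N). unfold X, Y, Z, r, q, u, w.
    assert (Hrec := Beta_telescoping a b N Ha Hb).
    replace (1 + (b - 1) / (INR N + 1)) with ((b + INR N) * / (INR N + 1)) by (field; lra).
    rewrite <- Rpower_mult_distr, Rpower_Rinv_l by (try apply Rinv_0_lt_compat; lra).
    rewrite Rpower_plus.
    assert (0 < Rpower (INR N + 1) a) by apply Rpower_pos.
    replace (1 + a / (INR N + b)) with ((a + b + INR N) / (b + INR N)) by (field; lra).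
    apply Rmult_eq_reg_r with ((b + INR N) * Rpower (INR N + 1) a).
    2:{ apply Rgt_not_eq. apply Rmult_lt_0_compat; lra. }
    transitivity (Rpower (INR N + 1) a * Rpower (INR N + 1) b * Rpower (b + INR N) a *
                  (Beta a b * Beta (a + b) (INR N + 1) * (a + b + INR N))).
    field; lra. rewrite Hrec. field; lra. }
  assert (HL : Un_cv (fun N => Beta a b * X N * r N * q N) (Beta a b * Gamma (a + b) * 1 * 1)).
  { apply CV_mult; [apply CV_mult; [apply CV_mult|]|]; auto. apply Un_cv_const. }
  assert (HR : Un_cv (fun N => Beta a b * X N * r N * q N) (Gamma a * Gamma b)).
  { intros e He. destruct (CV_mult _ _ _ _ HY HZ e He) as [N0 HN0]. exists N0.
    intros n Hn. rewrite Heq. apply HN0; auto. }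
  assert (Hu := UL_sequence _ _ _ HL HR). lra.
Qed.

Lemma Beta_3_2_3_2 : Beta (3/2) (3/2) = PI / 8.
Proof.
  unfold Beta.
  assert (HPI := PI_RGT_0).
  assert (H1 : forall x, Rmin 0 PI <= x <= Rmax 0 PI -> continuous (beta_integrand (3/2) (3/2)) ((fun y => (1 - cos y) / 2) x)).
  { intros; apply continuity_pt_continuous; apply continuity_pt_beta_integrand; lra. }
  assert (H2 : forall x, Rmin 0 PI <= x <= Rmax 0 PI -> is_derive (fun y => (1 - cos y) / 2) x ((fun y => sin y / 2) x) /\ continuous (fun y => sin y / 2) x).
  { intros; split. auto_derive; auto. change (- (1 * - sin x) * / 2 = sin x / 2); field. apply (continuity_pt_continuous (fun y => sin y / 2)). solve_continuity. }
  assert (H := RInt_comp (V:=R_CompleteNormedModule) (beta_integrand (3/2) (3/2)) (fun y => (1 - cos y) / 2) (fun y => sin y / 2) 0 PI H1 H2).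
  cbv beta in H.
  rewrite cos_0, cos_PI in H.
  replace ((1 - 1) / 2) with 0 in H by field. replace ((1 - -1) / 2) with 1 in H by field.
  rewrite <- H; clear H H1 H2.
  assert (E : @eq R (RInt (fun y => scal (sin y / 2) (beta_integrand (3/2) (3/2) ((1 - cos y) / 2))) 0 PI)
                    (RInt (fun y => sin y ^ 2 / 4) 0 PI)).
  { apply RInt_ext_R. intros y Hy. rewrite Rmin_left, Rmax_right in Hy by lra.
    unfold scal; simpl; unfold mult; simpl. unfold beta_integrand.
    assert (Hs : 0 < sin y) by (apply sin_gt_0; lra).
    assert (Hsc := sin2_cos2 y). unfold Rsqr in Hsc.
    assert (Hc : -1 < cos y < 1) by (split; nra).
    replace (3/2 - 1) with (/ 2) by field.
    rewrite !Rpower0_pos by lra. rewrite !Rpower_sqrt by lra.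
    rewrite <- sqrt_mult by lra.
    replace ((1 - cos y) / 2 * (1 - (1 - cos y) / 2)) with ((sin y / 2) ^ 2) by (field_simplify; nra).
    rewrite sqrt_pow2 by lra. field. }
  refine (eq_trans E _).
  rewrite (RInt_antiderivative (fun y => y / 8 - sin (2 * y) / 16)); try lra.
  - rewrite Rmult_0_r, sin_0. rewrite sin_2PI. field.
  - intros; solve_continuity.
  - intros y Hy. apply is_derive_Reals.
    auto_derive; auto. rewrite cos_2a_sin. field.
Qed.

Lemma Gamma_2 : Gamma 2 = 1.
Proof.
  assert (H := Beta_Gamma 1 1 ltac:(lra) ltac:(lra)).
  rewrite Beta_1_r, Gamma_1 in H by lra. replace (1 + 1) with 2 in H by ring. lra.
Qed.

Lemma Gamma_3 : Gamma 3 = 2.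
Proof.
  assert (H := Beta_Gamma 1 2 ltac:(lra) ltac:(lra)).
  assert (H2 := Beta_succ_r 1 1 ltac:(lra) ltac:(lra)).
  rewrite Beta_1_r in H2 by lra. replace (1 + 1) with 2 in H2 by ring.
  rewrite Gamma_1, Gamma_2 in H. replace (1 + 2) with 3 in H by ring. nra.
Qed.

Lemma Gamma_3_2 : Gamma (3/2) = sqrt PI / 2.
Proof.
  assert (H := Beta_Gamma (3/2) (3/2) ltac:(lra) ltac:(lra)).
  replace (3/2 + 3/2) with 3 in H by field. rewrite Beta_3_2_3_2, Gamma_3 in H.
  assert (Hp := Gamma_pos (3/2) ltac:(lra)).
  assert (HPI := PI_RGT_0).
  rewrite <- (sqrt_pow2 (Gamma (3/2))) by lra.
  replace (Gamma (3/2) ^ 2) with (PI / 4) by (simpl; lra).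
  rewrite sqrt_div_alt by lra. replace 4 with (2 ^ 2) by ring. rewrite sqrt_pow2 by lra. reflexivity.
Qed.

Lemma Gamma_5_2 : Gamma (5/2) = 3 * sqrt PI / 4.
Proof.
  assert (H := Beta_Gamma (3/2) 1 ltac:(lra) ltac:(lra)).
  rewrite Beta_1_r, Gamma_1, Gamma_3_2 in H by lra. replace (3/2 + 1) with (5/2) in H by field.
  apply Rmult_eq_reg_l with (/ (3/2)). rewrite H. field. apply Rinv_neq_0_compat; lra.
Qed.

Lemma Beta_3_2_r n : 0 <= n -> Beta (n + 1) (3/2) = sqrt PI * Gamma (n + 1) / (2 * Gamma (n + 5/2)).
Proof.
  intros Hn. assert (H := Beta_Gamma (n + 1) (3/2) ltac:(lra) ltac:(lra)).
  replace (n + 1 + 3/2) with (n + 5/2) in H by field. rewrite Gamma_3_2 in H.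
  assert (Hp := Gamma_pos (n + 5/2) ltac:(lra)).
  apply Rmult_eq_reg_r with (Gamma (n + 5/2)); [|lra]. rewrite H. field. lra.
Qed.

Lemma Beta_5_2_r n : 0 <= n -> Beta (n + 1) (5/2) = 3 * sqrt PI * Gamma (n + 1) / (4 * Gamma (n + 7/2)).
Proof.
  intros Hn. assert (H := Beta_Gamma (n + 1) (5/2) ltac:(lra) ltac:(lra)).
  replace (n + 1 + 5/2) with (n + 7/2) in H by field. rewrite Gamma_5_2 in H.
  assert (Hp := Gamma_pos (n + 7/2) ltac:(lra)).
  apply Rmult_eq_reg_r with (Gamma (n + 7/2)); [|lra]. rewrite H. field. lra.
Qed.

Lemma Beta_pos x y : 1 <= x -> 1 <= y -> 0 < Beta x y.
Proof.
  intros Hx Hy. assert (H := Beta_Gamma x y Hx Hy).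
  assert (Ha := Gamma_pos x Hx). assert (Hb := Gamma_pos y Hy).
  assert (Hab := Gamma_pos (x + y) ltac:(lra)).
  apply Rmult_lt_reg_r with (Gamma (x + y)); auto. rewrite H. nra.
Qed.

(** * Reduction of rho and p to Beta-type integrals *)

(* A function continuous on [0, 1] becomes continuous everywhere once composed with the
   projection onto [0, 1]; this is how the hypothesis on phi yields Riemann integrability. *)
Definition clamp01 x := if Rle_dec x 0 then 0 else if Rle_dec x 1 then x else 1.

Lemma clamp01_in x : 0 <= clamp01 x <= 1.
Proof. unfold clamp01. repeat match goal with |- context [Rle_dec ?a ?b] => destruct (Rle_dec a b) end; lra. Qed.

Lemma clamp01_id x : 0 <= x <= 1 -> clamp01 x = x.
Proof. intros. unfold clamp01. repeat match goal with |- context [Rle_dec ?a ?b] => destruct (Rle_dec a b) end; lra. Qed.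

Lemma clamp01_lipschitz x y : Rabs (clamp01 y - clamp01 x) <= Rabs (y - x).
Proof.
  unfold clamp01.
  repeat match goal with |- context [Rle_dec ?a ?b] => destruct (Rle_dec a b) end;
  unfold Rabs; repeat match goal with |- context [Rcase_abs ?a] => destruct (Rcase_abs a) end; lra.
Qed.

Lemma continuity_pt_comp_clamp01 (phi : R -> R) :
  (forall x, 0 <= x <= 1 -> limit1_in phi (fun y => 0 <= y <= 1) (phi x) x) ->
  forall x, continuity_pt (fun t => phi (clamp01 t)) x.
Proof.
  intros Hc x. apply continuity_pt_intro. intros e He.
  destruct (limit1_in_elim _ _ _ _ (Hc (clamp01 x) (clamp01_in x)) e He) as [a [Ha H1]].
  exists a; split; auto. intros y Hy. apply H1. apply clamp01_in.
  eapply Rle_lt_trans; [apply clamp01_lipschitz|auto].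
Qed.

Lemma RInt_reverse_rescale (f : R -> R) a b : a < b -> ex_RInt f a b ->
  ex_RInt (fun s => f (b - (b - a) * s)) 0 1 ->
  RInt f a b = (b - a) * RInt (fun s => f (b - (b - a) * s)) 0 1.
Proof.
  intros Hab Hf Hex.
  assert (Hf' : ex_RInt f ((a - b) * 0 + b) ((a - b) * 1 + b)).
  { replace ((a - b) * 0 + b) with b by ring. replace ((a - b) * 1 + b) with a by ring.
    apply ex_RInt_swap; auto. }
  assert (H := RInt_comp_lin (V:=R_CompleteNormedModule) f (a - b) b 0 1 Hf').
  replace ((a - b) * 0 + b) with b in H by ring. replace ((a - b) * 1 + b) with a in H by ring.
  assert (H2 := opp_RInt_swap (V:=R_CompleteNormedModule) f a b Hf).
  rewrite <- H in H2.
  rewrite (RInt_ext_R (fun y => scal (a - b) (f ((a - b) * y + b))) (fun s => (a - b) * f (b - (b - a) * s))) in H2.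
  2:{ intros. unfold scal; simpl; unfold mult; simpl. f_equal. f_equal. ring. }
  rewrite RInt_scal_R in H2 by auto.
  assert (H3 : - RInt f a b = (a - b) * RInt (fun s => f (b - (b - a) * s)) 0 1) by exact H2.
  lra.
Qed.

Lemma RInt_rescaled_factor (f g Q : R -> R) a b c : a < b -> 0 < c ->
  (forall x, continuity_pt g x) -> (forall x, a <= x <= b -> f x = g x) ->
  (forall s, 0 < s < 1 -> f (b - (b - a) * s) = c * Q s) ->
  ex_RInt Q 0 1 /\ Defs.RInt f a b = (b - a) * c * RInt Q 0 1.
Proof.
  intros Hab Hc Hg Hfg HQ.
  assert (Hin : forall s, 0 <= s <= 1 -> a <= b - (b - a) * s <= b) by (intros; split; nra).
  assert (exf : ex_RInt f a b).
  { apply (ex_RInt_ext_R g); [| apply ex_RInt_continuity_pt; auto].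
    intros x Hx. rewrite Rmin_left, Rmax_right in Hx by lra. symmetry; apply Hfg; lra. }
  assert (exfs : ex_RInt (fun s => f (b - (b - a) * s)) 0 1).
  { apply (ex_RInt_ext_R (fun s => g (b - (b - a) * s))).
    - intros s Hs. rewrite Rmin_left, Rmax_right in Hs by lra. symmetry; apply Hfg, Hin; lra.
    - apply ex_RInt_continuity_pt; intros.
      apply (continuity_pt_comp_total (fun s => b - (b - a) * s) g); auto. solve_continuity. }
  assert (exQ : ex_RInt Q 0 1).
  { apply (ex_RInt_ext_R (fun s => / c * f (b - (b - a) * s))); [| apply ex_RInt_scal_R; auto].
    intros s Hs. rewrite Rmin_left, Rmax_right in Hs by lra. rewrite HQ by lra. field. lra. }
  split; auto.
  rewrite Defs_RInt_eq, RInt_reverse_rescale by auto.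
  rewrite (RInt_ext_R _ (fun s => c * Q s))
    by (intros s Hs; rewrite Rmin_left, Rmax_right in Hs by lra; apply HQ; lra).
  rewrite RInt_scal_R by auto. symmetry; apply Rmult_assoc.
Qed.

Definition phi_ratio (phi : R -> R) n x := Rpower x (- n) * phi x.

(* With E = E0 - (E0 - V) s and eps = E0 / V - 1 one has 1 - E / E0 = eps / (1 + eps) * s and
   (E / V)^2 - 1 = eps (1 - s) (2 + eps (1 - s)).  The integrands of rho and p then become
   eps^(n + 1/2) times this function, with m w = (1 + w)^2, y = 3/2 for rho and m w = 2 + w,
   y = 5/2 for p. *)
Definition reduced_integrand (phi : R -> R) n eps (m : R -> R) y s :=
  phi_ratio phi n (eps / (1 + eps) * s) * Rpower (1 + eps) (- n) * m (eps * (1 - s)) *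
  sqrt (2 + eps * (1 - s)) * beta_integrand (n + 1) y s.

Lemma E0_div_minus_1_pos E0 V : 0 < V < E0 -> 0 < E0 / V - 1.
Proof.
  intros. assert (1 < E0 / V) by (apply Rmult_lt_reg_l with V; [lra|]; field_simplify; lra). lra.
Qed.

Lemma phi_ratio_factor (phi : R -> R) n x : 0 < x -> phi x = Rpower x n * phi_ratio phi n x.
Proof.
  intros Hx. unfold phi_ratio. rewrite <- Rmult_assoc, <- Rpower_plus.
  replace (n + - n) with 0 by ring. rewrite Rpower_O by auto. ring.
Qed.

Lemma Rpower_eps_ratio eps n s : 0 < eps -> 0 < s ->
  Rpower (eps / (1 + eps) * s) n = Rpower eps n * Rpower (1 + eps) (- n) * Rpower s n.
Proof.
  intros He Hs. unfold Rdiv. rewrite <- !Rpower_mult_distr; try (apply Rinv_0_lt_compat); try lra.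
  rewrite Rpower_Rinv_l, Rpower_Ropp by lra. reflexivity.
  apply Rmult_lt_0_compat; auto; apply Rinv_0_lt_compat; lra.
Qed.

Lemma sqrt_shell eps s : 0 < eps -> 0 < s < 1 ->
  sqrt ((1 + eps * (1 - s)) ^ 2 - 1) = sqrt eps * sqrt (1 - s) * sqrt (2 + eps * (1 - s)).
Proof.
  intros. replace ((1 + eps * (1 - s)) ^ 2 - 1) with (eps * ((1 - s) * (2 + eps * (1 - s)))) by ring.
  assert (0 <= eps * (1 - s)) by (apply Rmult_le_pos; lra).
  assert (0 <= (1 - s) * (2 + eps * (1 - s))) by (apply Rmult_le_pos; lra).
  rewrite (sqrt_mult eps), (sqrt_mult (1 - s)) by lra. ring.
Qed.

Lemma beta_integrand_3_2 n s : 0 <= n -> 0 < s < 1 ->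
  beta_integrand (n + 1) (3/2) s = Rpower s n * sqrt (1 - s).
Proof.
  intros Hn Hs. unfold beta_integrand. rewrite !Rpower0_pos by lra. replace (n + 1 - 1) with n by ring.
  replace (3/2 - 1) with (/ 2) by field. rewrite Rpower_sqrt by lra. reflexivity.
Qed.

Lemma beta_integrand_5_2 n s : 0 <= n -> 0 < s < 1 ->
  beta_integrand (n + 1) (5/2) s = Rpower s n * ((1 - s) * sqrt (1 - s)).
Proof.
  intros Hn Hs. unfold beta_integrand. rewrite !Rpower0_pos by lra. replace (n + 1 - 1) with n by ring.
  replace (5/2 - 1) with (1 + / 2) by field. rewrite Rpower_plus, Rpower_1, Rpower_sqrt by lra. reflexivity.
Qed.

Lemma Rpower_plus_half eps a : 0 < eps -> Rpower eps (a + / 2) = Rpower eps a * sqrt eps.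
Proof. intros. rewrite Rpower_plus, Rpower_sqrt by auto. reflexivity. Qed.

Section Rescaling.
Variables (phi : R -> R) (E0 n V : R).
Hypothesis hE0 : 0 < E0.
Hypothesis hn : 0 <= n.
Hypothesis hV : 0 < V < E0.

Let eps := E0 / V - 1.

Lemma rescaled_energy s : E0 - (E0 - V) * s = V * (1 + eps * (1 - s)).
Proof. unfold eps; field; lra. Qed.

Lemma rescaled_phi_arg s : 1 - (E0 - (E0 - V) * s) / E0 = eps / (1 + eps) * s.
Proof. unfold eps; field; lra. Qed.

Lemma rho_integrand_rescaled s : 0 < s < 1 ->
  phi (1 - (E0 - (E0 - V) * s) / E0) * (E0 - (E0 - V) * s) ^ 2 *
    sqrt (((E0 - (E0 - V) * s) / V) ^ 2 - 1)
  = V ^ 2 * Rpower eps (n + / 2) * reduced_integrand phi n eps (fun w => (1 + w) ^ 2) (3/2) s.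
Proof.
  intros Hs. assert (He : 0 < eps) by apply E0_div_minus_1_pos, hV.
  rewrite rescaled_phi_arg, rescaled_energy.
  replace (V * (1 + eps * (1 - s)) / V) with (1 + eps * (1 - s)) by (field; lra).
  rewrite sqrt_shell, Rpower_plus_half by auto.
  assert (Hx : 0 < eps / (1 + eps) * s) by (apply Rmult_lt_0_compat; [apply Rdiv_lt_0_compat|]; lra).
  rewrite (phi_ratio_factor phi n _ Hx), Rpower_eps_ratio by lra.
  unfold reduced_integrand. rewrite beta_integrand_3_2 by auto. ring.
Qed.

Lemma pres_integrand_rescaled s : 0 < s < 1 ->
  phi (1 - (E0 - (E0 - V) * s) / E0) * (((E0 - (E0 - V) * s) / V) ^ 2 - 1) *
    sqrt (((E0 - (E0 - V) * s) / V) ^ 2 - 1)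
  = eps * Rpower eps (n + / 2) * reduced_integrand phi n eps (fun w => 2 + w) (5/2) s.
Proof.
  intros Hs. assert (He : 0 < eps) by apply E0_div_minus_1_pos, hV.
  rewrite rescaled_phi_arg, rescaled_energy.
  replace (V * (1 + eps * (1 - s)) / V) with (1 + eps * (1 - s)) by (field; lra).
  rewrite sqrt_shell, Rpower_plus_half by auto.
  assert (Hx : 0 < eps / (1 + eps) * s) by (apply Rmult_lt_0_compat; [apply Rdiv_lt_0_compat|]; lra).
  rewrite (phi_ratio_factor phi n _ Hx), Rpower_eps_ratio by lra.
  unfold reduced_integrand. rewrite beta_integrand_5_2 by auto. ring.
Qed.

End Rescaling.

Section ReducedFormulas.
Variables (phi : R -> R) (E0 n : R).
Hypothesis hE0 : 0 < E0.
Hypothesis hn : 0 <= n.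
Hypothesis hcont : forall x, 0 <= x <= 1 -> limit1_in phi (fun y => 0 <= y <= 1) (phi x) x.

Lemma clamp01_energy V E : 0 < V -> V <= E <= E0 -> clamp01 (1 - E / E0) = 1 - E / E0.
Proof.
  intros HV HE. apply clamp01_id. destruct HE as [H1 H2].
  assert (0 < E / E0) by (apply Rdiv_lt_0_compat; lra).
  assert (E / E0 <= 1) by (apply Rmult_le_reg_r with E0; [lra|]; field_simplify; lra). lra.
Qed.

Lemma continuity_pt_phi_energy y : continuity_pt (fun E => phi (clamp01 (1 - E / E0))) y.
Proof.
  apply (continuity_pt_comp_total (fun E => 1 - E / E0) (fun t => phi (clamp01 t))).
  - solve_continuity.
  - apply continuity_pt_comp_clamp01; auto.
Qed.

Lemma rho_reduced V : 0 < V < E0 ->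
  ex_RInt (reduced_integrand phi n (E0 / V - 1) (fun w => (1 + w) ^ 2) (3/2)) 0 1 /\
  rho phi E0 V = 4 * PI * Rpower (E0 / V - 1) (n + 3/2) *
    RInt (reduced_integrand phi n (E0 / V - 1) (fun w => (1 + w) ^ 2) (3/2)) 0 1.
Proof.
  intros HV. assert (He := E0_div_minus_1_pos E0 V HV).
  destruct (RInt_rescaled_factor
    (fun E => phi (1 - E / E0) * E ^ 2 * sqrt ((E / V) ^ 2 - 1))
    (fun E => phi (clamp01 (1 - E / E0)) * E ^ 2 * sqrt ((E / V) ^ 2 - 1))
    (reduced_integrand phi n (E0 / V - 1) (fun w => (1 + w) ^ 2) (3/2))
    V E0 (V ^ 2 * Rpower (E0 / V - 1) (n + / 2))) as [Hex HI].
  - lra.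
  - apply Rmult_lt_0_compat; [nra | apply Rpower_pos].
  - intros y. apply (continuity_pt_mult (fun E => phi (clamp01 (1 - E / E0)) * E ^ 2)).
    + apply (continuity_pt_mult (fun E => phi (clamp01 (1 - E / E0))));
        [apply continuity_pt_phi_energy | solve_continuity].
    + solve_continuity.
  - intros E HE. cbv beta. rewrite (clamp01_energy V E) by lra. reflexivity.
  - intros s Hs. apply rho_integrand_rescaled; auto.
  - split; auto. unfold rho. rewrite HI.
    replace (n + 3/2) with ((n + / 2) + 1) by field.
    rewrite (Rpower_plus (n + / 2) 1), Rpower_1 by lra.
    replace (E0 - V) with (V * (E0 / V - 1)) by (field; lra).
    field. lra.
Qed.
Lemma pres_reduced V : 0 < V < E0 ->
  ex_RInt (reduced_integrand phi n (E0 / V - 1) (fun w => 2 + w) (5/2)) 0 1 /\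
  pres phi E0 V = 4 / 3 * PI * Rpower (E0 / V - 1) (n + 5/2) *
    RInt (reduced_integrand phi n (E0 / V - 1) (fun w => 2 + w) (5/2)) 0 1.
Proof.
  intros HV. assert (He := E0_div_minus_1_pos E0 V HV).
  destruct (RInt_rescaled_factor
    (fun E => phi (1 - E / E0) * ((E / V) ^ 2 - 1) * sqrt ((E / V) ^ 2 - 1))
    (fun E => phi (clamp01 (1 - E / E0)) * ((E / V) ^ 2 - 1) * sqrt ((E / V) ^ 2 - 1))
    (reduced_integrand phi n (E0 / V - 1) (fun w => 2 + w) (5/2))
    V E0 ((E0 / V - 1) * Rpower (E0 / V - 1) (n + / 2))) as [Hex HI].
  - lra.
  - apply Rmult_lt_0_compat; [lra | apply Rpower_pos].
  - intros y. apply (continuity_pt_mult (fun E => phi (clamp01 (1 - E / E0)) * ((E / V) ^ 2 - 1))).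
    + apply (continuity_pt_mult (fun E => phi (clamp01 (1 - E / E0))));
        [apply continuity_pt_phi_energy | solve_continuity].
    + solve_continuity.
  - intros E HE. cbv beta. rewrite (clamp01_energy V E) by lra. reflexivity.
  - intros s Hs. apply pres_integrand_rescaled; auto.
  - split; auto. unfold pres. rewrite HI.
    replace (n + 5/2) with ((n + / 2) + 1 + 1) by field.
    rewrite (Rpower_plus (n + / 2 + 1) 1), (Rpower_plus (n + / 2) 1), Rpower_1 by lra.
    replace (E0 - V) with (V * (E0 / V - 1)) by (field; lra).
    field. lra.
Qed.
End ReducedFormulas.

(** * Asymptotics as V -> E0 *)

Lemma Rpower_1_plus_opp_bounds eps n : 0 < eps -> 0 <= n ->
  1 - n * eps <= Rpower (1 + eps) (- n) <= 1.
Proof.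
  intros He Hn. unfold Rpower.
  assert (Hl0 : 0 <= ln (1 + eps)) by (rewrite <- ln_1; apply ln_le; lra).
  assert (Hl1 : ln (1 + eps) <= eps) by (generalize (ln_le_minus_1 (1 + eps) ltac:(lra)); lra).
  assert (Hnl : 0 <= n * ln (1 + eps) <= n * eps) by (split; [apply Rmult_le_pos|apply Rmult_le_compat_l]; lra).
  split.
  - generalize (exp_ineq1_le (- n * ln (1 + eps))).
    replace (- n * ln (1 + eps)) with (- (n * ln (1 + eps))) by ring. lra.
  - apply Rle_trans with (exp 0); [apply exp_le; lra | rewrite exp_0; lra].
Qed.

Lemma Rmult_le_compat4 a1 a2 a3 a4 b1 b2 b3 b4 :
  0 <= a1 <= b1 -> 0 <= a2 <= b2 -> 0 <= a3 <= b3 -> 0 <= a4 <= b4 ->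
  a1 * a2 * a3 * a4 <= b1 * b2 * b3 * b4.
Proof.
  intros. repeat apply Rmult_le_compat; try apply Rmult_le_pos; try apply Rmult_le_pos; lra.
Qed.

Lemma sqrt_2_plus_bounds eps w : 0 <= w <= eps -> sqrt 2 <= sqrt (2 + w) <= sqrt 2 * (1 + eps).
Proof.
  intros Hw. split; [apply sqrt_le_1_alt; lra|].
  rewrite <- (sqrt_pow2 (1 + eps)) by lra. rewrite <- sqrt_mult by nra.
  apply sqrt_le_1_alt. nra.
Qed.

Lemma beta_integrand_ge_0 x y s : 0 <= beta_integrand x y s.
Proof. unfold beta_integrand. apply Rmult_le_pos; apply Rpower0_ge_0. Qed.

Lemma reduced_integrand_bounds phi n C e eps (m : R -> R) m0 y s :
  0 <= n -> 0 < eps -> n * eps <= 1 -> 0 < e <= 1 -> 0 < s < 1 -> 0 < m0 ->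
  (forall w, 0 <= w <= eps -> m0 <= m w <= m0 * (1 + eps) ^ 2) ->
  Rabs (phi_ratio phi n (eps / (1 + eps) * s) - C) < C * e / 4 -> 0 < C ->
  sqrt 2 * m0 * C * ((1 - e / 4) * (1 - n * eps)) * beta_integrand (n + 1) y s
    <= reduced_integrand phi n eps m y s
    <= sqrt 2 * m0 * C * ((1 + e / 4) * (1 + eps) ^ 3) * beta_integrand (n + 1) y s.
Proof.
  intros Hn He Hne Hev Hs Hm0 Hm HH HC. apply Rabs_lt_inv in HH.
  assert (Hrp := Rpower_1_plus_opp_bounds eps n He Hn).
  assert (Hw : 0 <= eps * (1 - s) <= eps) by (split; nra).
  assert (Hsq := sqrt_2_plus_bounds eps _ Hw).
  assert (Hs2 : 0 < sqrt 2) by (apply sqrt_lt_R0; lra).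
  assert (Hmw := Hm _ Hw).
  assert (Hb := beta_integrand_ge_0 (n + 1) y s).
  unfold reduced_integrand. split; apply Rmult_le_compat_r; auto.
  - replace (sqrt 2 * m0 * C * ((1 - e / 4) * (1 - n * eps)))
      with (C * (1 - e / 4) * (1 - n * eps) * m0 * sqrt 2) by ring.
    apply Rmult_le_compat4; split; try lra; nra.
  - replace (sqrt 2 * m0 * C * ((1 + e / 4) * (1 + eps) ^ 3))
      with (C * (1 + e / 4) * 1 * (m0 * (1 + eps) ^ 2) * (sqrt 2 * (1 + eps))) by ring.
    apply Rmult_le_compat4; split; try lra; nra.
Qed.

(* The slack e / 56 absorbs (1 + eps)^3 <= 1 + 7 eps and the cross terms. *)
Lemma ratio_near_1 e n eps r : 0 < e <= 1 -> 0 <= n -> 0 < eps -> (n + 1) * eps <= e / 56 ->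
  (1 - e / 4) * (1 - n * eps) <= r <= (1 + e / 4) * (1 + eps) ^ 3 -> Rabs (r - 1) < e.
Proof.
  intros He Hn Heps H56 Hr.
  assert (Hne : n * eps <= e / 56) by nra.
  assert (He1 : eps <= e / 56) by nra.
  assert (Hc : (1 + eps) ^ 3 <= 1 + 7 * eps) by (simpl; nra).
  assert (Hup : (1 + e / 4) * (1 + eps) ^ 3 <= (1 + e / 4) * (1 + 7 * eps)) by (apply Rmult_le_compat_l; lra).
  assert (0 <= e / 4 * (n * eps)) by (apply Rmult_le_pos; [lra| apply Rmult_le_pos; lra]).
  assert (e * eps <= eps) by nra.
  apply Rabs_def1; nra.
Qed.

Lemma RInt_ratio_near_1 (Q b : R -> R) k e n eps :
  0 < e <= 1 -> 0 <= n -> 0 < eps -> (n + 1) * eps <= e / 56 -> 0 < k ->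
  ex_RInt Q 0 1 -> ex_RInt b 0 1 -> 0 < RInt b 0 1 ->
  (forall s, 0 < s < 1 ->
     k * ((1 - e / 4) * (1 - n * eps)) * b s <= Q s <= k * ((1 + e / 4) * (1 + eps) ^ 3) * b s) ->
  Rabs (RInt Q 0 1 / (k * RInt b 0 1) - 1) < e.
Proof.
  intros He Hn Heps H56 Hk HQ Hb Hbpos HQb.
  assert (Hlo : k * ((1 - e / 4) * (1 - n * eps)) * RInt b 0 1 <= RInt Q 0 1).
  { rewrite <- RInt_scal_R by auto.
    apply RInt_le; [lra| apply ex_RInt_scal_R; auto | auto | intros s Hs; apply HQb; lra]. }
  assert (Hup : RInt Q 0 1 <= k * ((1 + e / 4) * (1 + eps) ^ 3) * RInt b 0 1).
  { rewrite <- RInt_scal_R by auto.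
    apply RInt_le; [lra| auto | apply ex_RInt_scal_R; auto | intros s Hs; apply HQb; lra]. }
  apply (ratio_near_1 e n eps); auto.
  set (IQ := RInt Q 0 1 : R) in *. set (Ib := RInt b 0 1 : R) in *.
  assert (Hkb : 0 < k * Ib) by (apply Rmult_lt_0_compat; auto).
  assert (Hid : IQ / (k * Ib) * (k * Ib) = IQ) by (field; lra).
  split; apply Rmult_le_reg_r with (k * Ib); auto; rewrite Hid; nra.
Qed.

Section Asymptotics.
Variables (phi : R -> R) (E0 n C : R).
Hypothesis hE0 : 0 < E0.
Hypothesis hn : 0 <= n.
Hypothesis hC : 0 < C.
Hypothesis hlim : limit1_in (fun x => Rpower x (- n) * phi x) (fun x => 0 < x) C 0.

Lemma reduced_parameters_near_E0 e : 0 < e <= 1 -> exists a, 0 < a /\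
  forall V, 0 < V < E0 -> Rabs (V - E0) < a ->
  (n + 1) * (E0 / V - 1) <= e / 56 /\
  forall s, 0 < s < 1 ->
    Rabs (phi_ratio phi n ((E0 / V - 1) / (1 + (E0 / V - 1)) * s) - C) < C * e / 4.
Proof.
  intros He. assert (Heta : 0 < C * e / 4) by nra.
  destruct (limit1_in_elim _ _ _ _ hlim _ Heta) as [a0 [Ha0 Hl]].
  set (e0 := e / (56 * (n + 1))).
  assert (He0 : 0 < e0) by (unfold e0; apply Rdiv_lt_0_compat; lra).
  exists (Rmin (E0 / 2) (Rmin (E0 * e0 / 2) (E0 * a0))). split.
  { repeat apply Rmin_glb_lt; nra. }
  intros V HV Hd. rewrite Rabs_left in Hd by lra.
  assert (Hd1 : E0 - V < E0 / 2) by (generalize (Rmin_l (E0/2) (Rmin (E0 * e0 / 2) (E0 * a0))); lra).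
  assert (Hd2 : E0 - V < E0 * e0 / 2)
    by (generalize (Rmin_r (E0/2) (Rmin (E0 * e0 / 2) (E0 * a0))), (Rmin_l (E0 * e0 / 2) (E0 * a0)); lra).
  assert (Hd3 : E0 - V < E0 * a0)
    by (generalize (Rmin_r (E0/2) (Rmin (E0 * e0 / 2) (E0 * a0))), (Rmin_r (E0 * e0 / 2) (E0 * a0)); lra).
  assert (Hratio : (E0 / V - 1) / (1 + (E0 / V - 1)) = (E0 - V) / E0) by (field; lra).
  split.
  - replace (E0 / V - 1) with ((E0 - V) / V) by (field; lra).
    apply Rmult_le_reg_r with (V / (n + 1)); [apply Rdiv_lt_0_compat; lra|].
    replace ((n + 1) * ((E0 - V) / V) * (V / (n + 1))) with (E0 - V) by (field; lra).
    apply Rle_trans with (E0 * e0 / 2); [lra|]. unfold e0.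
    apply Rmult_le_reg_r with (n + 1); [lra|]. field_simplify; nra.
  - intros s Hs. rewrite Hratio. apply Hl.
    + apply Rmult_lt_0_compat; [apply Rdiv_lt_0_compat|]; lra.
    + rewrite Rminus_0_r, Rabs_pos_eq by (apply Rmult_le_pos; [left; apply Rdiv_lt_0_compat|]; lra).
      assert (0 < (E0 - V) / E0) by (apply Rdiv_lt_0_compat; lra).
      apply Rle_lt_trans with ((E0 - V) / E0); [nra|].
      apply Rmult_lt_reg_r with E0; [lra|]. field_simplify; lra.
Qed.

Lemma RInt_reduced_integrand_asymptotic (m : R -> R) m0 y : 1 <= y -> 0 < m0 ->
  (forall w, 0 <= w <= 1 -> m0 <= m w <= m0 * (1 + w) ^ 2) ->
  (forall V, 0 < V < E0 -> ex_RInt (reduced_integrand phi n (E0 / V - 1) m y) 0 1) ->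
  limit1_in (fun V => RInt (reduced_integrand phi n (E0 / V - 1) m y) 0 1 /
                      (sqrt 2 * m0 * C * Beta (n + 1) y))
    (fun V => 0 < V < E0) 1 E0.
Proof.
  intros Hy Hm0 Hm Hex. apply limit1_in_intro. intros e0 He0. set (e := Rmin e0 1).
  assert (He : 0 < e <= 1) by (unfold e; split; [apply Rmin_glb_lt; lra| apply Rmin_r]).
  destruct (reduced_parameters_near_E0 e He) as [a [Ha Hnear]]. exists a; split; auto.
  intros V HV Hd. destruct (Hnear V HV Hd) as [Heps Hphi].
  assert (Hpos := E0_div_minus_1_pos E0 V HV).
  set (eps := E0 / V - 1) in *.
  assert (Hsmall : n * eps <= 1 /\ eps <= 1) by (clear - hn Hpos Heps He; split; nra).
  apply Rlt_le_trans with e; [|apply Rmin_l].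
  unfold Beta.
  apply (RInt_ratio_near_1 _ _ _ e n eps); [exact He | exact hn | exact Hpos | exact Heps | | | | |].
  - assert (0 < sqrt 2) by (apply sqrt_lt_R0; lra). repeat apply Rmult_lt_0_compat; auto.
  - exact (Hex V HV).
  - apply ex_RInt_beta_integrand; lra.
  - apply Beta_pos; lra.
  - intros s Hs.
    apply reduced_integrand_bounds; [exact hn | exact Hpos | tauto | exact He | exact Hs
      | exact Hm0 | | exact (Hphi s Hs) | exact hC].
    intros w Hw. specialize (Hm w ltac:(lra)). split; [lra|].
    apply Rle_trans with (m0 * (1 + w) ^ 2); [lra|].
    apply Rmult_le_compat_l; [lra|]. apply pow_incr; lra.
Qed.

End Asymptotics.

Section DensityPressure.
Variables (phi : R -> R) (E0 n C : R).
Hypothesis hE0 : 0 < E0.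
Hypothesis hn : 0 <= n.
Hypothesis hC : 0 < C.
Hypothesis hcont : forall x, 0 <= x <= 1 -> limit1_in phi (fun y => 0 <= y <= 1) (phi x) x.
Hypothesis hlim : limit1_in (fun x => Rpower x (- n) * phi x) (fun x => 0 < x) C 0.

Lemma rho_asymptotic :
  limit1_in (fun V => rho phi E0 V /
      (4 * sqrt 2 * PI * C * Beta (n + 1) (3/2) * Rpower (E0 / V - 1) (n + 3 / 2)))
    (fun V => 0 < V < E0) 1 E0.
Proof.
  assert (HB := Beta_pos (n + 1) (3/2) ltac:(lra) ltac:(lra)).
  assert (Hs2 : 0 < sqrt 2) by (apply sqrt_lt_R0; lra).
  assert (HPI := PI_RGT_0).
  apply (limit1_in_ext _ (fun V => RInt (reduced_integrand phi n (E0 / V - 1) (fun w => (1 + w) ^ 2) (3/2)) 0 1 /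
                                   (sqrt 2 * 1 * C * Beta (n + 1) (3/2)))).
  - intros V HV. destruct (rho_reduced phi E0 n hE0 hn hcont V HV) as [_ ->].
    assert (0 < Rpower (E0 / V - 1) (n + 3/2)) by apply Rpower_pos.
    field. repeat split; lra.
  - apply RInt_reduced_integrand_asymptotic; auto; try lra.
    + intros w Hw. split; [|lra]. simpl. nra.
    + intros V HV. apply (rho_reduced phi E0 n hE0 hn hcont V HV).
Qed.

Lemma pres_asymptotic :
  limit1_in (fun V => pres phi E0 V /
      (Rpower 2 (3 / 2) * (4 / 3) * PI * C * Beta (n + 1) (5/2) * Rpower (E0 / V - 1) (n + 5 / 2)))
    (fun V => 0 < V < E0) 1 E0.
Proof.
  assert (HB := Beta_pos (n + 1) (5/2) ltac:(lra) ltac:(lra)).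
  assert (Hs2 : 0 < sqrt 2) by (apply sqrt_lt_R0; lra).
  assert (HPI := PI_RGT_0).
  assert (H232 : Rpower 2 (3 / 2) = 2 * sqrt 2).
  { replace (3 / 2) with (1 + / 2) by field. rewrite Rpower_plus_half, Rpower_1 by lra. ring. }
  apply (limit1_in_ext _ (fun V => RInt (reduced_integrand phi n (E0 / V - 1) (fun w => 2 + w) (5/2)) 0 1 /
                                   (sqrt 2 * 2 * C * Beta (n + 1) (5/2)))).
  - intros V HV. destruct (pres_reduced phi E0 n hE0 hn hcont V HV) as [_ ->].
    assert (0 < Rpower (E0 / V - 1) (n + 5/2)) by apply Rpower_pos.
    rewrite H232. field. repeat split; lra.
  - apply RInt_reduced_integrand_asymptotic; auto; try lra.
    + intros w Hw. split; [lra|]. simpl. nra.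
    + intros V HV. apply (pres_reduced phi E0 n hE0 hn hcont V HV).
Qed.

End DensityPressure.

Lemma power_law_ratio f g a b e1 e2 K gam : 0 < a -> 0 < b -> 0 < e1 -> 0 < f / (a * e1) ->
  Rpower e1 gam = e2 -> K * Rpower a gam = b ->
  g / (K * Rpower f gam) = g / (b * e2) * / Rpower (f / (a * e1)) gam.
Proof.
  intros Ha Hb He1 Hr He Hk.
  assert (Hf : f = f / (a * e1) * a * e1) by (field; lra).
  set (r := f / (a * e1)) in *.
  rewrite Hf, <- (Rpower_mult_distr (r * a) e1), <- (Rpower_mult_distr r a) by nra.
  rewrite He, <- Hk. assert (0 < Rpower r gam) by apply Rpower_pos.
  assert (0 < Rpower a gam) by apply Rpower_pos.
  assert (0 < e2) by (rewrite <- He; apply Rpower_pos).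
  field. repeat split; try lra. intro HK. rewrite HK in Hk. lra.
Qed.

Lemma limit1_in_power_law (f g e1 e2 : R -> R) D x0 a b K gam :
  0 < a -> 0 < b -> K * Rpower a gam = b ->
  (forall x, D x -> 0 < e1 x /\ Rpower (e1 x) gam = e2 x) ->
  limit1_in (fun x => f x / (a * e1 x)) D 1 x0 ->
  limit1_in (fun x => g x / (b * e2 x)) D 1 x0 ->
  limit1_in (fun x => g x / (K * Rpower (f x) gam)) D 1 x0.
Proof.
  intros Ha Hb HK He Hf Hg.
  destruct (limit1_in_elim _ _ _ _ Hf (1/2) ltac:(lra)) as [r [Hr Hnear]].
  apply (limit1_in_ext_locally _
    (fun x => g x / (b * e2 x) * / Rpower (f x / (a * e1 x)) gam) _ _ _ r Hr).
  - intros x Hx Hd. specialize (Hnear x Hx Hd). apply Rabs_lt_inv in Hnear.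
    destruct (He x Hx). apply power_law_ratio; auto; lra.
  - replace 1 with (1 * / 1) at 1 by (rewrite Rinv_1; ring).
    apply limit_mul; auto. apply limit_inv; [|lra].
    assert (H := limit1_in_comp_continuity_pt _ (fun t => Rpower t gam) _ _ _ Hf
                   (continuity_pt_Rpower 1 gam ltac:(lra))).
    unfold Rpower at 2 in H. rewrite ln_1, Rmult_0_r, exp_0 in H. exact H.
Qed.

Lemma four_sqrt2_PI_pos C : 0 < C -> 0 < 4 * sqrt 2 * PI * C.
Proof.
  intros HC. assert (HPI := PI_RGT_0). assert (Hs2 : 0 < sqrt 2) by (apply sqrt_lt_R0; lra).
  apply Rmult_lt_0_compat; [apply Rmult_lt_0_compat; [apply Rmult_lt_0_compat|]|]; lra.
Qed.

Lemma power_law_constant n C A B : 0 <= n -> 0 < C -> 0 < A ->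
  2 / 3 * Rpower (4 * sqrt 2 * PI * C) (- (2 / (2 * n + 3))) * B
    * Rpower A (- ((2 * n + 5) / (2 * n + 3)))
  * Rpower (4 * sqrt 2 * PI * C * A) ((2 * n + 5) / (2 * n + 3))
  = Rpower 2 (3 / 2) * (4 / 3) * PI * C * B.
Proof.
  intros Hn HC HA.
  assert (Hc := four_sqrt2_PI_pos C HC).
  set (c := 4 * sqrt 2 * PI * C) in *. set (g := (2 * n + 5) / (2 * n + 3)).
  rewrite <- Rpower_mult_distr by auto.
  transitivity (2 / 3 * B * (Rpower c (- (2 / (2 * n + 3))) * Rpower c g) * (Rpower A (- g) * Rpower A g));
    [unfold g; ring|].
  rewrite <- !Rpower_plus.
  replace (- (2 / (2 * n + 3)) + g) with 1 by (unfold g; field; lra).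
  replace (- g + g) with 0 by ring.
  rewrite Rpower_1, Rpower_O by auto.
  replace (3 / 2) with (1 + / 2) by field. rewrite Rpower_plus_half, Rpower_1 by lra.
  unfold c. field.
Qed.

Theorem mainTheorem9 (E0 n C : R) (phi : R -> R)
  (G1 G52 G72 : R)
  (hE0 : 0 < E0) (hn : 0 <= n) (hC : 0 < C)
  (hpos : forall x, x <= 1 -> 0 <= phi x)
  (hcont : forall x, 0 <= x <= 1 -> limit1_in phi (fun y => 0 <= y <= 1) (phi x) x)
  (hneg : forall x, x < 0 -> phi x = 0)
  (hlim : limit1_in (fun x => Rpower x (- n) * phi x) (fun x => 0 < x) C 0)
  (hG1 : is_Gamma (n + 1) G1) (hG52 : is_Gamma (n + 5 / 2) G52)
  (hG72 : is_Gamma (n + 7 / 2) G72) :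
  let An := sqrt PI * G1 / (2 * G52) in
  let Bn := 3 * sqrt PI * G1 / (4 * G72) in
  let eps := fun V => E0 / V - 1 in
  let gam := (2 * n + 5) / (2 * n + 3) in
  let K := 2 / 3 * Rpower (4 * sqrt 2 * PI * C) (- (2 / (2 * n + 3))) * Bn
           * Rpower An (- ((2 * n + 5) / (2 * n + 3))) in
  limit1_in (fun V => rho phi E0 V / (4 * sqrt 2 * PI * C * An * Rpower (eps V) (n + 3 / 2)))
    (fun V => 0 < V < E0) 1 E0 /\
  limit1_in (fun V => pres phi E0 V /
                      (Rpower 2 (3 / 2) * (4 / 3) * PI * C * Bn * Rpower (eps V) (n + 5 / 2)))
    (fun V => 0 < V < E0) 1 E0 /\
  limit1_in (fun V => pres phi E0 V / (K * Rpower (rho phi E0 V) gam))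
    (fun V => 0 < V < E0) 1 E0.
Proof.
  cbv beta zeta.
  rewrite (is_Gamma_Gamma (n + 1) G1 ltac:(lra) hG1), (is_Gamma_Gamma (n + 5/2) G52 ltac:(lra) hG52),
    (is_Gamma_Gamma (n + 7/2) G72 ltac:(lra) hG72), <- Beta_3_2_r, <- Beta_5_2_r by lra.
  assert (HA := Beta_pos (n + 1) (3/2) ltac:(lra) ltac:(lra)).
  assert (HB := Beta_pos (n + 1) (5/2) ltac:(lra) ltac:(lra)).
  assert (Hrho := rho_asymptotic phi E0 n C hE0 hn hC hcont hlim).
  assert (Hpres := pres_asymptotic phi E0 n C hE0 hn hC hcont hlim).
  repeat split; auto.
  apply limit1_in_power_law with
    (a := 4 * sqrt 2 * PI * C * Beta (n + 1) (3/2))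
    (b := Rpower 2 (3 / 2) * (4 / 3) * PI * C * Beta (n + 1) (5/2))
    (e1 := fun V => Rpower (E0 / V - 1) (n + 3 / 2))
    (e2 := fun V => Rpower (E0 / V - 1) (n + 5 / 2)).
  - apply Rmult_lt_0_compat; [apply four_sqrt2_PI_pos|]; auto.
  - assert (0 < Rpower 2 (3 / 2)) by apply Rpower_pos. assert (HPI := PI_RGT_0).
    apply Rmult_lt_0_compat; [apply Rmult_lt_0_compat; [apply Rmult_lt_0_compat;
      [apply Rmult_lt_0_compat|]|]|]; lra.
  - apply power_law_constant; auto.
  - intros V HV. split; [apply Rpower_pos|].
    rewrite Rpower_mult. f_equal. field. lra.
  - exact Hrho.
  - exact Hpres.
Qed.
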